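(* Let $A=I_0+\dots+I_n$ be a sum of C$^*$-ideals, $p\in\{0,\dots,n\}$ and $J\subseteq\{0,\dots,n\}$ with $|J|=p+1$. Then $$B_J/(B_J\cap Q_{p-1})\cong S^{n-p}\Big(\bigcap_{j\in J}I_j\Big)$$ as C$^*$-algebras.
   Context: $\Delta^n=\{x\in[0,1]^{n+1}:\sum_ix_i=1\}$, $\partial\Delta^n$ = points with a zero coordinate, $\Delta^n_j=\{x\in\Delta^n:x_j\le x_i\ \forall i\}$. $B=\{f:\Delta^n\to A\text{ continuous}: f|_{\partial\Delta^n}=0,\ f(\Delta^n_j)\subseteq I_j\ \forall j\}$; $B_J=\{f\in B:f(\Delta^n_{j'})=0\ \forall j'\notin J\}$; $Q_p=\sum_{|L|\le p+1}B_L$ for $p\in\mathbb Z$ (so $Q_{-1}=0$). $S^k$ denotes the $k$-fold C$^*$-suspension, $SA=\{f:[0,1]\to A\text{ continuous}:f(0)=f(1)=0\}$, with $S^0$ the identity. *)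

From Stdlib Require Import Reals Lra Lia ZArith List.
Open Scope R_scope.

Record Cplx := mkC { Cre : R ; Cim : R }.
Definition C0 : Cplx := mkC 0 0.
Definition C1 : Cplx := mkC 1 0.
Definition Cadd (a b : Cplx) : Cplx := mkC (Cre a + Cre b) (Cim a + Cim b).
Definition Cmul (a b : Cplx) : Cplx :=
  mkC (Cre a * Cre b - Cim a * Cim b) (Cre a * Cim b + Cim a * Cre b).
Definition Cconj (a : Cplx) : Cplx := mkC (Cre a) (- Cim a).
Definition Cabs (a : Cplx) : R := sqrt (Cre a * Cre a + Cim a * Cim a).

Record CStarAlg := {
  car :> Type;
  c0 : car;
  cadd : car -> car -> car;
  copp : car -> car;
  cscal : Cplx -> car -> car;
  cmul : car -> car -> car;
  cstar : car -> car;
  cnorm : car -> R;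
  cadd_assoc : forall x y z, cadd x (cadd y z) = cadd (cadd x y) z;
  cadd_comm : forall x y, cadd x y = cadd y x;
  cadd_0 : forall x, cadd x c0 = x;
  cadd_opp : forall x, cadd x (copp x) = c0;
  cscal_1 : forall x, cscal C1 x = x;
  cscal_mul : forall a b x, cscal (Cmul a b) x = cscal a (cscal b x);
  cscal_addl : forall a b x, cscal (Cadd a b) x = cadd (cscal a x) (cscal b x);
  cscal_addr : forall a x y, cscal a (cadd x y) = cadd (cscal a x) (cscal a y);
  cmul_assoc : forall x y z, cmul x (cmul y z) = cmul (cmul x y) z;
  cmul_addl : forall x y z, cmul (cadd x y) z = cadd (cmul x z) (cmul y z);
  cmul_addr : forall x y z, cmul x (cadd y z) = cadd (cmul x y) (cmul x z);
  cmul_scall : forall a x y, cmul (cscal a x) y = cscal a (cmul x y);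
  cmul_scalr : forall a x y, cmul x (cscal a y) = cscal a (cmul x y);
  cstar_invol : forall x, cstar (cstar x) = x;
  cstar_add : forall x y, cstar (cadd x y) = cadd (cstar x) (cstar y);
  cstar_scal : forall a x, cstar (cscal a x) = cscal (Cconj a) (cstar x);
  cstar_mul : forall x y, cstar (cmul x y) = cmul (cstar y) (cstar x);
  cnorm_nonneg : forall x, 0 <= cnorm x;
  cnorm_eq0 : forall x, cnorm x = 0 -> x = c0;
  cnorm_tri : forall x y, cnorm (cadd x y) <= cnorm x + cnorm y;
  cnorm_scal : forall a x, cnorm (cscal a x) = Cabs a * cnorm x;
  cnorm_mul : forall x y, cnorm (cmul x y) <= cnorm x * cnorm y;
  cnorm_cstar : forall x, cnorm (cmul (cstar x) x) = cnorm x * cnorm x;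
  ccomplete : forall u : nat -> car,
    (forall eps, 0 < eps -> exists N, forall m k, (N <= m)%nat -> (N <= k)%nat ->
        cnorm (cadd (u m) (copp (u k))) < eps) ->
    exists l, forall eps, 0 < eps -> exists N, forall m, (N <= m)%nat ->
        cnorm (cadd (u m) (copp l)) < eps
}.

Arguments c0 {_}. Arguments cadd {_}. Arguments copp {_}. Arguments cscal {_}.
Arguments cmul {_}. Arguments cstar {_}. Arguments cnorm {_}.

Definition cdist {A : CStarAlg} (x y : A) : R := cnorm (cadd x (copp y)).

Definition is_Cideal (A : CStarAlg) (I : A -> Prop) : Prop :=
  I c0 /\
  (forall x y, I x -> I y -> I (cadd x y)) /\
  (forall a x, I x -> I (cscal a x)) /\
  (forall x y, I y -> I (cmul x y)) /\
  (forall x y, I x -> I (cmul x y)) /\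
  (forall (u : nat -> A) l, (forall k, I (u k)) ->
     (forall eps, 0 < eps -> exists N, forall m, (N <= m)%nat -> cdist (u m) l < eps) ->
     I l).

Fixpoint sumA {A : CStarAlg} (g : nat -> A) (n : nat) : A :=
  match n with
  | O => g O
  | S m => cadd (sumA g m) (g (S m))
  end.

Definition is_sum_of_ideals (A : CStarAlg) (I : nat -> A -> Prop) (n : nat) : Prop :=
  forall a : A, exists g : nat -> A, (forall j, (j <= n)%nat -> I j (g j)) /\ a = sumA g n.

Definition in_simplex (n : nat) (x : nat -> R) : Prop :=
  (forall i, (i <= n)%nat -> 0 <= x i <= 1) /\
  (forall i, (n < i)%nat -> x i = 0) /\
  sum_f_R0 x n = 1.

Definition in_boundary (n : nat) (x : nat -> R) : Prop :=
  in_simplex n x /\ exists i, (i <= n)%nat /\ x i = 0.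

Definition in_Delta_j (n j : nat) (x : nat -> R) : Prop :=
  in_simplex n x /\ forall i, (i <= n)%nat -> x j <= x i.

(* Functions Delta^n -> A, encoded as total functions that vanish off Delta^n. *)
Definition SFun (A : CStarAlg) := (nat -> R) -> A.

Definition SF_add {A : CStarAlg} (f g : SFun A) : SFun A := fun x => cadd (f x) (g x).
Definition SF_scal {A : CStarAlg} (a : Cplx) (f : SFun A) : SFun A := fun x => cscal a (f x).
Definition SF_mul {A : CStarAlg} (f g : SFun A) : SFun A := fun x => cmul (f x) (g x).
Definition SF_star {A : CStarAlg} (f : SFun A) : SFun A := fun x => cstar (f x).
Definition SF_zero {A : CStarAlg} : SFun A := fun _ => c0.

Definition cont_on_simplex {A : CStarAlg} (n : nat) (f : SFun A) : Prop :=
  forall x, in_simplex n x -> forall eps, 0 < eps -> exists delta, 0 < delta /\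
    forall y, in_simplex n y -> (forall i, (i <= n)%nat -> Rabs (y i - x i) < delta) ->
      cdist (f y) (f x) < eps.

Definition inB (A : CStarAlg) (I : nat -> A -> Prop) (n : nat) (f : SFun A) : Prop :=
  (forall x, ~ in_simplex n x -> f x = c0) /\
  cont_on_simplex n f /\
  (forall x, in_boundary n x -> f x = c0) /\
  (forall j x, (j <= n)%nat -> in_Delta_j n j x -> I j (f x)).

Definition inB_L (A : CStarAlg) (I : nat -> A -> Prop) (n : nat) (L : list nat)
    (f : SFun A) : Prop :=
  inB A I n f /\
  forall j' x, (j' <= n)%nat -> ~ In j' L -> in_Delta_j n j' x -> f x = c0.

Definition inQ (A : CStarAlg) (I : nat -> A -> Prop) (n : nat) (p : Z) (f : SFun A) : Prop :=
  exists ls : list (list nat * SFun A),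
    Forall (fun Lg => NoDup (fst Lg) /\ (forall j, In j (fst Lg) -> (j <= n)%nat) /\
                      (Z.of_nat (length (fst Lg)) <= p + 1)%Z /\
                      inB_L A I n (fst Lg) (snd Lg)) ls /\
    f = fold_right (fun Lg acc => SF_add (snd Lg) acc) SF_zero ls.

(* S^k D for a C*-subalgebra D of A: elements are nested functions
   [0,1] -> [0,1] -> ... -> A (k levels), each level vanishing off (0,1),
   continuous for the sup norm of the inner level. *)
Fixpoint STy (A : CStarAlg) (k : nat) : Type :=
  match k with O => car A | S k' => R -> STy A k' end.

Fixpoint ST_zero {A : CStarAlg} (k : nat) : STy A k :=
  match k return STy A k with O => c0 | S k' => fun _ => ST_zero k' end.
Fixpoint ST_add {A : CStarAlg} (k : nat) : STy A k -> STy A k -> STy A k :=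
  match k return STy A k -> STy A k -> STy A k with
  | O => fun a b => cadd a b
  | S k' => fun f g t => ST_add k' (f t) (g t) end.
Fixpoint ST_scal {A : CStarAlg} (k : nat) (c : Cplx) : STy A k -> STy A k :=
  match k return STy A k -> STy A k with
  | O => fun a => cscal c a
  | S k' => fun f t => ST_scal k' c (f t) end.
Fixpoint ST_mul {A : CStarAlg} (k : nat) : STy A k -> STy A k -> STy A k :=
  match k return STy A k -> STy A k -> STy A k with
  | O => fun a b => cmul a b
  | S k' => fun f g t => ST_mul k' (f t) (g t) end.
Fixpoint ST_star {A : CStarAlg} (k : nat) : STy A k -> STy A k :=
  match k return STy A k -> STy A k with
  | O => fun a => cstar a
  | S k' => fun f t => ST_star k' (f t) end.
Fixpoint ST_distle {A : CStarAlg} (k : nat) : STy A k -> STy A k -> R -> Prop :=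
  match k return STy A k -> STy A k -> R -> Prop with
  | O => fun a b e => cdist a b <= e
  | S k' => fun f g e => forall t, ST_distle k' (f t) (g t) e end.

Fixpoint inSusp (A : CStarAlg) (D : A -> Prop) (k : nat) : STy A k -> Prop :=
  match k return STy A k -> Prop with
  | O => fun a => D a
  | S k' => fun f =>
      (forall t, 0 <= t <= 1 -> inSusp A D k' (f t)) /\
      (forall t, (t <= 0 \/ 1 <= t) -> f t = ST_zero k') /\
      (forall t, 0 <= t <= 1 -> forall eps, 0 < eps -> exists delta, 0 < delta /\
         forall s, 0 <= s <= 1 -> Rabs (s - t) < delta -> ST_distle k' (f s) (f t) eps)
  end.

(* B_J / (B_J ∩ Q) ≅ S^k D as C*-algebras: there is a *-homomorphism
   B_J -> S^k D which is onto and whose kernel is exactly B_J ∩ Q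
   (first isomorphism theorem; a bijective *-homomorphism of C*-algebras
   is a C*-isomorphism). *)
Definition quotient_iso_susp (A : CStarAlg) (BJ : SFun A -> Prop) (Q : SFun A -> Prop)
    (D : A -> Prop) (k : nat) : Prop :=
  exists phi : SFun A -> STy A k,
    (forall f g, BJ f -> BJ g -> phi (SF_add f g) = ST_add k (phi f) (phi g)) /\
    (forall a f, BJ f -> phi (SF_scal a f) = ST_scal k a (phi f)) /\
    (forall f g, BJ f -> BJ g -> phi (SF_mul f g) = ST_mul k (phi f) (phi g)) /\
    (forall f, BJ f -> phi (SF_star f) = ST_star k (phi f)) /\
    (forall f, BJ f -> inSusp A D k (phi f)) /\
    (forall h, inSusp A D k h -> exists f, BJ f /\ phi f = h) /\
    (forall f, BJ f -> (phi f = ST_zero k <-> Q f)).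

(** Let [K] be the complement of [J] in [{0..n}], so [|K| = k = n - p], and let
    [F_J = {x in Delta^n : x_j = min x for all j in J}].  An explicit homeomorphism
    [[0,1]^k -> F_J] sends the boundary of the cube into [dDelta^n] (facets [v_l = 1]) or
    into [Delta^n_i] with [i] in [K] (facets [v_l = 0]), where every element of [B_J]
    vanishes; so restricting to [F_J] gives a *-homomorphism [B_J -> S^k(I_J)].
    It vanishes on [Q_(p-1)] because each [B_L] with [|L| <= p] misses some [j] in [J]
    and [F_J] lies in [Delta^n_j].  Conversely, if [f] vanishes on [F_J], the functions
    [(x_j - min x) / sum_(i in J) (x_i - min x)], [j] in [J], form a partition of unity
    off [F_J], and multiplying [f] by the [j]-th one lands in [B_(J \ {j})].  For
    surjectivity, an element of [S^k] is pulled back along a map [Delta^n -> R^k] that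
    inverts the homeomorphism on [F_J], and cut off by a function that is [1] on
    [F_J \ dDelta^n] and [0] on [dDelta^n]. *)

From Stdlib Require Import Reals Lra Lia ZArith List FunctionalExtensionality Classical ClassicalEpsilon.
From Coquelicot Require Compactness.
Open Scope R_scope.

(** * Vector-space arithmetic in a C*-algebra *)

Section CStarArith.
Context {A : CStarAlg}.
Implicit Types x y z : A.

Lemma cadd_0l x : cadd c0 x = x.
Proof. rewrite cadd_comm; apply cadd_0. Qed.

Lemma cadd_cancel_r x y z : cadd x z = cadd y z -> x = y.
Proof.
  intro H. rewrite <- (cadd_0 A x), <- (cadd_0 A y), <- (cadd_opp A z).
  rewrite !cadd_assoc, H. reflexivity.
Qed.

Lemma cadd_idem_eq0 x : cadd x x = x -> x = c0.
Proof. intro H. apply (cadd_cancel_r _ _ x). rewrite cadd_0l. exact H. Qed.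

Lemma cscal_c0 a : cscal a (@c0 A) = c0.
Proof. apply cadd_idem_eq0. rewrite <- cscal_addr, cadd_0. reflexivity. Qed.

Lemma cscal_raddl r s x :
  cscal (mkC (r + s) 0) x = cadd (cscal (mkC r 0) x) (cscal (mkC s 0) x).
Proof. rewrite <- cscal_addl. unfold Cadd; simpl. rewrite Rplus_0_r. reflexivity. Qed.

Lemma cscal_0 x : cscal (mkC 0 0) x = c0.
Proof. apply cadd_idem_eq0. rewrite <- cscal_raddl, Rplus_0_l. reflexivity. Qed.

Lemma copp_unique x y : cadd x y = c0 -> copp x = y.
Proof.
  intro H. apply (cadd_cancel_r _ _ x). rewrite (cadd_comm _ (copp x)), cadd_opp.
  rewrite cadd_comm; symmetry; exact H.
Qed.

Lemma copp_scal x : copp x = cscal (mkC (-1) 0) x.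
Proof.
  apply copp_unique. transitivity (cadd (cscal (mkC 1 0) x) (cscal (mkC (-1) 0) x)).
  - f_equal. symmetry. apply cscal_1.
  - rewrite <- cscal_raddl, Rplus_opp_r. apply cscal_0.
Qed.

Lemma copp_c0 : copp (@c0 A) = c0.
Proof. rewrite copp_scal; apply cscal_c0. Qed.

Lemma copp_add x y : copp (cadd x y) = cadd (copp x) (copp y).
Proof. rewrite !copp_scal, cscal_addr. reflexivity. Qed.

Lemma copp_copp x : copp (copp x) = x.
Proof. apply copp_unique. rewrite cadd_comm. apply cadd_opp. Qed.

Lemma cscal_copp a x : cscal a (copp x) = copp (cscal a x).
Proof. symmetry. apply copp_unique. rewrite <- cscal_addr, cadd_opp. apply cscal_c0. Qed.

Lemma Cabs_real r : Cabs (mkC r 0) = Rabs r.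
Proof. unfold Cabs; simpl. rewrite Rmult_0_l, Rplus_0_r. apply sqrt_Rsqr_abs. Qed.

Lemma cnorm_rscal r x : cnorm (cscal (mkC r 0) x) = Rabs r * cnorm x.
Proof. rewrite cnorm_scal, Cabs_real. reflexivity. Qed.

Lemma cnorm_c0 : cnorm (@c0 A) = 0.
Proof. rewrite <- (cscal_0 (@c0 A)), cnorm_rscal, Rabs_R0; ring. Qed.

Lemma cnorm_opp x : cnorm (copp x) = cnorm x.
Proof. rewrite copp_scal, cnorm_rscal, Rabs_left by lra. ring. Qed.

Lemma cdist_self x : cdist x x = 0.
Proof. unfold cdist. rewrite cadd_opp. apply cnorm_c0. Qed.

Lemma cdist_sym x y : cdist x y = cdist y x.
Proof.
  unfold cdist. rewrite <- cnorm_opp, copp_add, copp_copp, cadd_comm. reflexivity.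
Qed.

Lemma cdist_tri x y z : cdist x z <= cdist x y + cdist y z.
Proof.
  unfold cdist. eapply Rle_trans; [|apply cnorm_tri].
  right. f_equal. rewrite <- !cadd_assoc. f_equal.
  rewrite cadd_assoc, (cadd_comm _ (copp y)), cadd_opp, cadd_0l. reflexivity.
Qed.

Lemma cdist_c0 x : cdist x c0 = cnorm x.
Proof. unfold cdist. rewrite copp_c0, cadd_0. reflexivity. Qed.

Lemma cdist_rscal r s x y :
  cdist (cscal (mkC r 0) x) (cscal (mkC s 0) y) <= Rabs (r - s) * cnorm x + Rabs s * cdist x y.
Proof.
  unfold cdist.
  replace (cadd (cscal (mkC r 0) x) (copp (cscal (mkC s 0) y))) with
    (cadd (cscal (mkC (r - s) 0) x) (cscal (mkC s 0) (cadd x (copp y)))).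
  - eapply Rle_trans; [apply cnorm_tri|]. rewrite !cnorm_rscal. lra.
  - unfold Rminus. rewrite cscal_raddl, cscal_addr, cscal_copp, <- cadd_assoc. f_equal.
    rewrite cadd_assoc, <- cscal_raddl, Rplus_opp_l, cscal_0, cadd_0l. reflexivity.
Qed.

End CStarArith.

(** * Finite sums, maxima and minima *)

(** [rsum k g] and [rmax k g] range over [l < k], while [rmin n x] ranges over
    [i <= n], matching the coordinates [0..n] of [Delta^n]; [rmax] is floored at [0]. *)
Fixpoint rsum (k : nat) (g : nat -> R) : R :=
  match k with O => 0 | S k' => rsum k' g + g k' end.
Fixpoint rmax (k : nat) (g : nat -> R) : R :=
  match k with O => 0 | S k' => Rmax (rmax k' g) (g k') end.
Fixpoint rmin (n : nat) (x : nat -> R) : R :=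
  match n with O => x O | S n' => Rmin (rmin n' x) (x (S n')) end.
Fixpoint lsum (J : list nat) (g : nat -> R) : R :=
  match J with nil => 0 | j :: J' => g j + lsum J' g end.

Lemma rmin_le n x i : (i <= n)%nat -> rmin n x <= x i.
Proof.
  induction n; simpl; intro H.
  - replace i with 0%nat by lia; lra.
  - destruct (Nat.eq_dec i (S n)) as [->|Hne]; [apply Rmin_r|].
    eapply Rle_trans; [apply Rmin_l|]. apply IHn; lia.
Qed.

Lemma rmin_attained n x : exists i, (i <= n)%nat /\ rmin n x = x i.
Proof.
  induction n; simpl.
  - exists 0%nat; split; auto.
  - destruct IHn as [i [Hi E]]. unfold Rmin. destruct (Rle_dec (rmin n x) (x (S n))).
    + exists i; split; auto.
    + exists (S n); split; auto.
Qed.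

Lemma rmin_glb n x c : (forall i, (i <= n)%nat -> c <= x i) -> c <= rmin n x.
Proof. intro H. destruct (rmin_attained n x) as [i [Hi ->]]. auto. Qed.

Lemma rmax_ge0 k g : 0 <= rmax k g.
Proof. induction k; simpl; [lra|]. eapply Rle_trans; [apply IHk|apply Rmax_l]. Qed.

Lemma rmax_ge k g l : (l < k)%nat -> g l <= rmax k g.
Proof.
  induction k; simpl; intro H; [lia|].
  destruct (Nat.eq_dec l k) as [->|Hne]; [apply Rmax_r|].
  eapply Rle_trans; [apply IHk; lia|apply Rmax_l].
Qed.

Lemma rmax_lub k g c : 0 <= c -> (forall l, (l < k)%nat -> g l <= c) -> rmax k g <= c.
Proof.
  induction k; simpl; intros H0 H; auto.
  apply Rmax_lub; [apply IHk; auto|apply H; lia].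
Qed.

Lemma rmax_lub_lt k g c : 0 < c -> (forall l, (l < k)%nat -> g l < c) -> rmax k g < c.
Proof.
  induction k; simpl; intros H0 H; auto.
  apply Rmax_lub_lt; [apply IHk; auto|apply H; lia].
Qed.

Lemma rmax_attained k g : 0 < rmax k g -> exists l, (l < k)%nat /\ rmax k g = g l.
Proof.
  induction k; simpl; intro H; [lra|].
  unfold Rmax in *. destruct (Rle_dec (rmax k g) (g k)).
  - exists k; split; auto.
  - destruct (IHk H) as [l [Hl E]]. exists l; split; auto.
Qed.

Lemma rmax_ext k g h : (forall l, (l < k)%nat -> g l = h l) -> rmax k g = rmax k h.
Proof. induction k; simpl; intro H; auto. f_equal; [apply IHk; intros; apply H; lia|apply H; lia]. Qed.

Lemma rsum_ext k g h : (forall l, (l < k)%nat -> g l = h l) -> rsum k g = rsum k h.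
Proof. induction k; simpl; intro H; auto. f_equal; [apply IHk; intros; apply H; lia|apply H; lia]. Qed.

Lemma rmax_eq0 k g : (forall l, (l < k)%nat -> g l = 0) -> rmax k g = 0.
Proof. intro H. apply Rle_antisym; [apply rmax_lub; [lra|]|apply rmax_ge0]. intros l Hl; rewrite H; auto; lra. Qed.

Lemma rsum_eq0 k g : (forall l, (l < k)%nat -> g l = 0) -> rsum k g = 0.
Proof. induction k; simpl; intro H; auto. rewrite IHk, H by (auto; intros; apply H; lia). ring. Qed.

Lemma rmax_scale k g c : 0 <= c -> rmax k (fun l => c * g l) = c * rmax k g.
Proof.
  intro Hc. induction k; simpl; [ring|]. rewrite IHk.
  destruct (Req_dec c 0) as [->|Hc0]; [rewrite !Rmult_0_l; apply Rmax_left; lra|].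
  unfold Rmax. destruct (Rle_dec (rmax k g) (g k)), (Rle_dec (c * rmax k g) (c * g k)); auto.
  - exfalso. apply n. apply Rmult_le_compat_l; lra.
  - exfalso. apply n. apply Rmult_le_reg_l with c; lra.
Qed.

Lemma rsum_scale k g c : rsum k (fun l => c * g l) = c * rsum k g.
Proof. induction k; simpl; [ring|]. rewrite IHk; ring. Qed.

Lemma rsum_nonneg k g : (forall l, (l < k)%nat -> 0 <= g l) -> 0 <= rsum k g.
Proof.
  induction k; simpl; intro H; [lra|].
  assert (0 <= g k) by (apply H; lia).
  assert (0 <= rsum k g) by (apply IHk; intros; apply H; lia). lra.
Qed.

Lemma rsum_ge k g l : (forall l, (l < k)%nat -> 0 <= g l) -> (l < k)%nat -> g l <= rsum k g.
Proof.
  induction k; simpl; intros H Hl; [lia|].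
  destruct (Nat.eq_dec l k) as [->|Hne].
  - assert (0 <= rsum k g) by (apply rsum_nonneg; intros; apply H; lia). lra.
  - assert (0 <= g k) by (apply H; lia).
    assert (g l <= rsum k g) by (apply IHk; [intros; apply H|]; lia). lra.
Qed.

Lemma rsum_eq0_inv k g : (forall l, (l < k)%nat -> 0 <= g l) -> rsum k g = 0 ->
  forall l, (l < k)%nat -> g l = 0.
Proof. intros H E l Hl. assert (0 <= g l) by auto. assert (g l <= rsum k g) by (apply rsum_ge; auto). lra. Qed.

Lemma rmax_le_rsum k g : (forall l, (l < k)%nat -> 0 <= g l) -> rmax k g <= rsum k g.
Proof. intro H. apply rmax_lub; [apply rsum_nonneg; auto|]. intros; apply rsum_ge; auto. Qed.

Lemma rmax_eq0_inv k g : (forall l, (l < k)%nat -> 0 <= g l) -> rmax k g = 0 ->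
  forall l, (l < k)%nat -> g l = 0.
Proof. intros H E l Hl. assert (0 <= g l) by auto. assert (g l <= rmax k g) by (apply rmax_ge; auto). lra. Qed.

Lemma rsum_indicator k l0 c : (l0 < k)%nat -> rsum k (fun l => if Nat.eq_dec l l0 then c else 0) = c.
Proof.
  induction k; simpl; intro H; [lia|].
  destruct (Nat.eq_dec k l0) as [->|Hne].
  - rewrite rsum_eq0; [ring|]. intros l Hl. destruct (Nat.eq_dec l l0); [lia|auto].
  - rewrite IHk by lia. ring.
Qed.

Lemma sum_f_R0_indicator n i0 c : (i0 <= n)%nat ->
  sum_f_R0 (fun i => if Nat.eq_dec i0 i then c else 0) n = c.
Proof.
  induction n; cbn [sum_f_R0]; intro H.
  - replace i0 with 0%nat by lia. destruct (Nat.eq_dec 0 0); [auto|lia].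
  - destruct (Nat.eq_dec i0 (S n)) as [->|Hne].
    + replace (sum_f_R0 _ n) with 0; [ring|]. symmetry. apply sum_eq_R0.
      intros m Hm. destruct (Nat.eq_dec (S n) m); [lia|auto].
    + rewrite IHn by lia. ring.
Qed.

Lemma sum_f_R0_rsum n k (G : nat -> nat -> R) :
  sum_f_R0 (fun i => rsum k (fun l => G l i)) n = rsum k (fun l => sum_f_R0 (G l) n).
Proof.
  induction k; simpl.
  - apply sum_eq_R0. auto.
  - rewrite sum_plus, IHk. reflexivity.
Qed.

Lemma sum_f_R0_ext n g h : (forall i, (i <= n)%nat -> g i = h i) -> sum_f_R0 g n = sum_f_R0 h n.
Proof. induction n; simpl; intro H; [apply H; lia|]. f_equal; [apply IHn; intros; apply H; lia|apply H; lia]. Qed.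

Lemma sum_f_R0_nonneg n g : (forall i, (i <= n)%nat -> 0 <= g i) -> 0 <= sum_f_R0 g n.
Proof. intro H. rewrite <- (sum_eq_R0 (fun _ => 0) n) by auto. apply sum_Rle. auto. Qed.

Lemma sum_f_R0_ge n g i : (forall i, (i <= n)%nat -> 0 <= g i) -> (i <= n)%nat -> g i <= sum_f_R0 g n.
Proof.
  induction n; cbn [sum_f_R0]; intros H Hi.
  - replace i with 0%nat by lia; lra.
  - assert (0 <= sum_f_R0 g n) by (apply sum_f_R0_nonneg; intros; apply H; lia).
    destruct (Nat.eq_dec i (S n)) as [->|]; [lra|].
    assert (0 <= g (S n)) by (apply H; lia).
    assert (g i <= sum_f_R0 g n) by (apply IHn; [intros; apply H|]; lia). lra.
Qed.

Lemma lsum_nonneg J g : (forall j, In j J -> 0 <= g j) -> 0 <= lsum J g.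
Proof. induction J; simpl; intro H; [lra|]. assert (0 <= g a) by auto. assert (0 <= lsum J g) by auto. lra. Qed.

Lemma lsum_ge J g j : (forall j, In j J -> 0 <= g j) -> In j J -> g j <= lsum J g.
Proof.
  induction J; simpl; intros H Hj; [contradiction|].
  destruct Hj as [->|Hj].
  - assert (0 <= lsum J g) by (apply lsum_nonneg; auto). lra.
  - assert (0 <= g a) by auto. assert (g j <= lsum J g) by auto. lra.
Qed.

Lemma lsum_eq0_inv J g : (forall j, In j J -> 0 <= g j) -> lsum J g = 0 -> forall j, In j J -> g j = 0.
Proof. intros H E j Hj. assert (g j <= lsum J g) by (apply lsum_ge; auto). assert (0 <= g j) by auto. lra. Qed.

Lemma lsum_eq0 J g : (forall j, In j J -> g j = 0) -> lsum J g = 0.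
Proof. induction J; simpl; intro H; auto. rewrite H, IHJ by auto. ring. Qed.

Lemma lsum_div J g c : lsum J (fun j => g j / c) = lsum J g / c.
Proof. induction J; simpl; [unfold Rdiv; ring|]. rewrite IHJ; unfold Rdiv; ring. Qed.

Lemma Rdiv_nonneg a b : 0 <= a -> 0 <= b -> 0 <= a / b.
Proof.
  intros Ha Hb. destruct (Req_dec b 0) as [->|E]; [unfold Rdiv; rewrite Rinv_0; lra|].
  apply Rmult_le_pos; auto. apply Rlt_le, Rinv_0_lt_compat; lra.
Qed.

Lemma ratio_bound a b : 0 <= a <= b -> 0 <= a / b <= 1.
Proof.
  intros H. destruct (Req_dec b 0) as [E|E].
  - unfold Rdiv. rewrite E, Rinv_0. lra.
  - split.
    + apply Rmult_le_pos; [lra|]. apply Rlt_le, Rinv_0_lt_compat; lra.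
    + apply Rmult_le_reg_r with b; [lra|]. unfold Rdiv. rewrite Rmult_assoc, Rinv_l by auto. lra.
Qed.

Definition gap (n : nat) (x : nat -> R) (i : nat) : R := x i - rmin n x.

Lemma gap_nonneg n x i : (i <= n)%nat -> 0 <= gap n x i.
Proof. intro Hi. unfold gap. assert (T := rmin_le n x i Hi). lra. Qed.

(** * Pointwise continuity of real functions of finitely many variables *)

Definition close_vec (N : nat) (d : R) (x x0 : nat -> R) :=
  forall i, (i < N)%nat -> Rabs (x i - x0 i) < d.

Definition rcont_at (N : nat) (P : (nat -> R) -> Prop) (F : (nat -> R) -> R) (x0 : nat -> R) :=
  forall eps, 0 < eps -> exists d, 0 < d /\
    forall x, P x -> close_vec N d x x0 -> Rabs (F x - F x0) < eps.

Lemma close_vec_mono N d d' x x0 : d <= d' -> close_vec N d x x0 -> close_vec N d' x x0.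
Proof. intros H H1 i Hi. specialize (H1 i Hi). lra. Qed.

Section RealContinuity.
Variables (N : nat) (P : (nat -> R) -> Prop) (x0 : nat -> R).
Implicit Types F G : (nat -> R) -> R.

Lemma rcont_at_const c : rcont_at N P (fun _ => c) x0.
Proof. intros e He. exists 1. split; [lra|]. intros. rewrite Rminus_diag, Rabs_R0; lra. Qed.

Lemma rcont_at_coord i : (i < N)%nat -> rcont_at N P (fun x => x i) x0.
Proof. intros Hi e He. exists e. split; [lra|]. intros x _ Hx. apply Hx, Hi. Qed.

Lemma rcont_at_ext F G : (forall x, F x = G x) -> rcont_at N P F x0 -> rcont_at N P G x0.
Proof.
  intros H H1 e He. destruct (H1 e He) as [d [Hd H2]]. exists d; split; auto.
  intros. rewrite <- !H. auto.
Qed.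

Lemma rcont_at_plus F G : rcont_at N P F x0 -> rcont_at N P G x0 ->
  rcont_at N P (fun x => F x + G x) x0.
Proof.
  intros H1 H2 e He. destruct (H1 (e/2)) as [d1 [Hd1 K1]]; [lra|].
  destruct (H2 (e/2)) as [d2 [Hd2 K2]]; [lra|].
  exists (Rmin d1 d2). split; [apply Rmin_pos; auto|]. intros x Px Hx.
  assert (A1 := K1 x Px (close_vec_mono _ _ _ _ _ (Rmin_l _ _) Hx)).
  assert (A2 := K2 x Px (close_vec_mono _ _ _ _ _ (Rmin_r _ _) Hx)).
  replace (F x + G x - (F x0 + G x0)) with ((F x - F x0) + (G x - G x0)) by ring.
  eapply Rle_lt_trans; [apply Rabs_triang|]. lra.
Qed.

Lemma rcont_at_comp F g : rcont_at N P F x0 -> continuity_pt g (F x0) ->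
  rcont_at N P (fun x => g (F x)) x0.
Proof.
  intros H1 H2 e He. destruct (H2 e He) as [a [Ha K]].
  destruct (H1 a Ha) as [d [Hd K2]]. exists d; split; auto. intros x Px Hx.
  destruct (Req_dec (F x) (F x0)) as [E|E].
  - rewrite E, Rminus_diag, Rabs_R0; lra.
  - apply (K (F x)). split; [split; [exact I|auto]|]. apply K2; auto.
Qed.

Lemma continuity_pt_id t : continuity_pt (fun s => s) t.
Proof. apply derivable_continuous_pt, derivable_pt_id. Qed.

Lemma rcont_at_opp F : rcont_at N P F x0 -> rcont_at N P (fun x => - F x) x0.
Proof.
  intro H. apply (rcont_at_comp _ (fun t => - t)); auto.
  exact (continuity_pt_opp _ _ (continuity_pt_id _)).
Qed.

Lemma rcont_at_minus F G : rcont_at N P F x0 -> rcont_at N P G x0 ->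
  rcont_at N P (fun x => F x - G x) x0.
Proof. intros. apply rcont_at_plus; auto. apply rcont_at_opp; auto. Qed.

Lemma rcont_at_scale F c : rcont_at N P F x0 -> rcont_at N P (fun x => c * F x) x0.
Proof.
  intro H. apply (rcont_at_comp _ (fun t => c * t)); auto.
  apply continuity_pt_mult; [apply continuity_pt_const; intros ? ?; reflexivity|apply continuity_pt_id].
Qed.

Lemma rcont_at_sqr F : rcont_at N P F x0 -> rcont_at N P (fun x => F x * F x) x0.
Proof.
  intro H. apply (rcont_at_comp _ (fun t => t * t)); auto.
  apply continuity_pt_mult; apply continuity_pt_id.
Qed.

Lemma rcont_at_mult F G : rcont_at N P F x0 -> rcont_at N P G x0 ->
  rcont_at N P (fun x => F x * G x) x0.
Proof.
  intros H1 H2.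
  apply (rcont_at_ext (fun x => /4 * ((F x + G x) * (F x + G x)) + - (/4 * ((F x - G x) * (F x - G x))))).
  { intro x. field. }
  apply rcont_at_plus; [|apply rcont_at_opp];
    apply rcont_at_scale, rcont_at_sqr; [apply rcont_at_plus|apply rcont_at_minus]; auto.
Qed.

Lemma rcont_at_inv F : rcont_at N P F x0 -> F x0 <> 0 -> rcont_at N P (fun x => / F x) x0.
Proof.
  intros H Hn. apply (rcont_at_comp _ (fun t => / t)); auto.
  exact (continuity_pt_inv _ _ (continuity_pt_id _) Hn).
Qed.

Lemma rcont_at_div F G : rcont_at N P F x0 -> rcont_at N P G x0 -> G x0 <> 0 ->
  rcont_at N P (fun x => F x / G x) x0.
Proof. intros. apply rcont_at_mult; auto. apply rcont_at_inv; auto. Qed.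

Lemma rcont_at_abs F : rcont_at N P F x0 -> rcont_at N P (fun x => Rabs (F x)) x0.
Proof. intro H. apply (rcont_at_comp _ Rabs); auto. apply Rcontinuity_abs. Qed.

Lemma rcont_at_max F G : rcont_at N P F x0 -> rcont_at N P G x0 ->
  rcont_at N P (fun x => Rmax (F x) (G x)) x0.
Proof.
  intros H1 H2. apply (rcont_at_ext (fun x => /2 * (F x + G x) + /2 * Rabs (F x - G x))).
  { intro x. unfold Rmax. destruct (Rle_dec (F x) (G x)).
    - rewrite Rabs_left1 by lra. field.
    - rewrite Rabs_right by lra. field. }
  apply rcont_at_plus; apply rcont_at_scale; [apply rcont_at_plus|apply rcont_at_abs, rcont_at_minus]; auto.
Qed.

Lemma rcont_at_min F G : rcont_at N P F x0 -> rcont_at N P G x0 ->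
  rcont_at N P (fun x => Rmin (F x) (G x)) x0.
Proof.
  intros H1 H2. apply (rcont_at_ext (fun x => - Rmax (- F x) (- G x))).
  { intro x. unfold Rmax, Rmin. destruct (Rle_dec (- F x) (- G x)), (Rle_dec (F x) (G x)); lra. }
  apply rcont_at_opp, rcont_at_max; apply rcont_at_opp; auto.
Qed.

Lemma rcont_at_squeeze0 F G : (forall x, P x -> 0 <= F x <= G x) -> F x0 = 0 -> G x0 = 0 ->
  rcont_at N P G x0 -> rcont_at N P F x0.
Proof.
  intros HFG HF HG H eps Heps. destruct (H eps Heps) as [d [Hd K]]. exists d; split; auto.
  intros x Px Hx. specialize (K x Px Hx). specialize (HFG x Px).
  rewrite HF, HG, Rminus_0_r in *. rewrite Rabs_right in * by lra. lra.
Qed.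

Lemma rcont_at_rsum k (G : nat -> (nat -> R) -> R) : (forall l, (l < k)%nat -> rcont_at N P (G l) x0) ->
  rcont_at N P (fun x => rsum k (fun l => G l x)) x0.
Proof.
  induction k; intro H; simpl; [apply rcont_at_const|].
  apply rcont_at_plus; [apply IHk; intros; apply H; lia|apply H; lia].
Qed.

Lemma rcont_at_rmax k (G : nat -> (nat -> R) -> R) : (forall l, (l < k)%nat -> rcont_at N P (G l) x0) ->
  rcont_at N P (fun x => rmax k (fun l => G l x)) x0.
Proof.
  induction k; intro H; simpl; [apply rcont_at_const|].
  apply rcont_at_max; [apply IHk; intros; apply H; lia|apply H; lia].
Qed.

Lemma rcont_at_lsum J (G : nat -> (nat -> R) -> R) : (forall j, In j J -> rcont_at N P (G j) x0) ->
  rcont_at N P (fun x => lsum J (fun j => G j x)) x0.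
Proof.
  induction J; intro H; simpl; [apply rcont_at_const|].
  apply rcont_at_plus; [apply H; left; auto|apply IHJ; intros; apply H; right; auto].
Qed.

Lemma rcont_at_rmin n : (n < N)%nat -> rcont_at N P (rmin n) x0.
Proof.
  induction n; intro H; simpl; [apply rcont_at_coord; lia|].
  apply rcont_at_min; [apply IHn; lia|apply rcont_at_coord; lia].
Qed.

Lemma rcont_at_gap n i : (n < N)%nat -> (i < N)%nat -> rcont_at N P (fun x => gap n x i) x0.
Proof. intros. apply rcont_at_minus; [apply rcont_at_coord|apply rcont_at_rmin]; auto. Qed.

Lemma rcont_at_uniform M (G : nat -> (nat -> R) -> R) :
  (forall l, (l < M)%nat -> rcont_at N P (G l) x0) ->
  forall eps, 0 < eps -> exists d, 0 < d /\ forall x, P x -> close_vec N d x x0 ->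
    forall l, (l < M)%nat -> Rabs (G l x - G l x0) < eps.
Proof.
  induction M; intros H e He.
  - exists 1. split; [lra|]. intros. lia.
  - destruct (IHM (fun l Hl => H l ltac:(lia)) e He) as [d1 [Hd1 K1]].
    destruct (H M ltac:(lia) e He) as [d2 [Hd2 K2]].
    exists (Rmin d1 d2). split; [apply Rmin_pos; auto|]. intros x Px Hx l Hl.
    destruct (Nat.eq_dec l M) as [->|Hne].
    + apply K2; auto. eapply close_vec_mono; [apply Rmin_r|]; eauto.
    + apply K1; auto; [|lia]. eapply close_vec_mono; [apply Rmin_l|]; eauto.
Qed.

End RealContinuity.

(** * The face [F_J] of the simplex and the cube *)

Definition enumerates_compl (n : nat) (J : list nat) (k : nat) (e : nat -> nat) :=
  (forall l, (l < k)%nat -> (e l <= n)%nat /\ ~ In (e l) J) /\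
  (forall l l', (l < k)%nat -> (l' < k)%nat -> e l = e l' -> l = l') /\
  (forall i, (i <= n)%nat -> ~ In i J -> exists l, (l < k)%nat /\ e l = i).

Definition in_face (n : nat) (J : list nat) (x : nat -> R) :=
  in_simplex n x /\ forall j, In j J -> forall i, (i <= n)%nat -> x j <= x i.

(** Where every element of [B_J] vanishes. *)
Definition vanishing_locus (n : nat) (J : list nat) (x : nat -> R) :=
  in_boundary n x \/ exists i, (i <= n)%nat /\ ~ In i J /\ in_Delta_j n i x.

Definition in_cube (k : nat) (v : nat -> R) := forall l, (l < k)%nat -> 0 <= v l <= 1.

Definition face_point (n k : nat) (e : nat -> nat) (c : R) (y : nat -> R) (i : nat) : R :=
  if le_dec i n then c + rsum k (fun l => if Nat.eq_dec (e l) i then y l else 0) else 0.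

Definition renorm (k : nat) (v : nat -> R) (l : nat) : R := v l * rmax k v / rsum k v.

(** The homeomorphism [[0,1]^k -> F_J] and its inverse, defined on all of [Delta^n].
    [cube_to_face v] puts [(1 - max v)/(n+1)] on [J] and adds [renorm k v], whose sum is
    [max v], on [K]; so the coordinates sum to [1] and the minimum sits on [J].
    Both rely on [x / 0 = 0] when [v = 0], resp. when all gaps vanish. *)
Definition cube_to_face (n k : nat) (e : nat -> nat) (v : nat -> R) : nat -> R :=
  face_point n k e ((1 - rmax k v) / INR (S n)) (renorm k v).

Definition face_to_cube (n k : nat) (e : nat -> nat) (x : nat -> R) (l : nat) : R :=
  gap n x (e l) * rsum k (fun l => gap n x (e l)) / rmax k (fun l => gap n x (e l)).

Lemma in_cube_rmax k v : in_cube k v -> rmax k v <= 1.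
Proof. intro H. apply rmax_lub; [lra|]. intros l Hl; apply H; auto. Qed.

Lemma in_cube_rsum_eq0 k v : in_cube k v -> rsum k v = 0 -> forall l, (l < k)%nat -> v l = 0.
Proof. intros H E. apply rsum_eq0_inv; auto. intros l Hl; apply H; auto. Qed.

Lemma renorm_bound k v l : in_cube k v -> (l < k)%nat -> 0 <= renorm k v l <= rmax k v.
Proof.
  intros H Hl. unfold renorm. destruct (H l Hl).
  assert (Hl' : v l <= rsum k v) by (apply rsum_ge; auto; intros; apply H; auto).
  assert (HM := rmax_ge0 k v).
  replace (v l * rmax k v / rsum k v) with (rmax k v * (v l / rsum k v)) by (unfold Rdiv; ring).
  destruct (ratio_bound (v l) (rsum k v)) as [R1 R2]; [lra|]. split; [nra|].
  rewrite <- (Rmult_1_r (rmax k v)) at 2. apply Rmult_le_compat_l; lra.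
Qed.

Lemma renorm_sum k v : in_cube k v -> rsum k (renorm k v) = rmax k v.
Proof.
  intro H. destruct (Req_dec (rsum k v) 0) as [E|E].
  - assert (Z := in_cube_rsum_eq0 k v H E).
    rewrite rmax_eq0, rsum_eq0; auto. intros l Hl. unfold renorm. rewrite Z; auto. unfold Rdiv; ring.
  - unfold renorm. rewrite (rsum_ext _ _ (fun l => (rmax k v / rsum k v) * v l)).
    + rewrite rsum_scale. field. auto.
    + intros; unfold Rdiv; ring.
Qed.

Lemma renorm_ext k v w : (forall l, (l < k)%nat -> v l = w l) -> forall l, (l < k)%nat ->
  renorm k v l = renorm k w l.
Proof. intros H l Hl. unfold renorm. rewrite (rmax_ext k v w), (rsum_ext k v w), H by auto. reflexivity. Qed.

Definition clamp01 (v : nat -> R) (l : nat) : R := Rmax 0 (Rmin 1 (v l)).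

Lemma clamp01_in_cube k v : in_cube k (clamp01 v).
Proof. intros l _. unfold clamp01. split; [apply Rmax_l|]. apply Rmax_lub; [lra|apply Rmin_l]. Qed.

Lemma clamp01_id v l : 0 <= v l <= 1 -> clamp01 v l = v l.
Proof. intro H. unfold clamp01. rewrite Rmin_right, Rmax_right by lra. auto. Qed.

Lemma clamp01_idem v : clamp01 (clamp01 v) = clamp01 v.
Proof. apply functional_extensionality; intro l. apply clamp01_id, (clamp01_in_cube (S l)). lia. Qed.

Lemma clamp01_lipschitz v w l : Rabs (clamp01 v l - clamp01 w l) <= Rabs (v l - w l).
Proof.
  unfold clamp01, Rmax, Rmin. destruct (Rle_dec 1 (v l)), (Rle_dec 1 (w l));
  repeat match goal with |- context [Rle_dec ?a ?b] => destruct (Rle_dec a b) end;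
  unfold Rabs; repeat match goal with |- context [Rcase_abs ?a] => destruct (Rcase_abs a) end; lra.
Qed.

Lemma clamp01_cases v l :
  (clamp01 v l = 0 /\ v l <= 0) \/ (clamp01 v l = 1 /\ 1 <= v l) \/ (0 < clamp01 v l < 1 /\ clamp01 v l = v l).
Proof. unfold clamp01, Rmax, Rmin. repeat destruct Rle_dec; lra. Qed.

Lemma rcont_at_clamp01 N P l x0 : (l < N)%nat -> rcont_at N P (fun v => clamp01 v l) x0.
Proof.
  intro Hl. unfold clamp01.
  apply rcont_at_max; [apply rcont_at_const|].
  apply rcont_at_min; [apply rcont_at_const|apply rcont_at_coord; auto].
Qed.

Section CubeFace.
Variables (n : nat) (J : list nat) (k : nat) (e : nat -> nat).
Hypothesis He : enumerates_compl n J k e.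
Hypothesis HJn : forall j, In j J -> (j <= n)%nat.
Variable j0 : nat.
Hypothesis Hj0 : In j0 J.

Lemma e_le l : (l < k)%nat -> (e l <= n)%nat.
Proof. intro Hl. apply (proj1 He l Hl). Qed.

Lemma face_point_sum c y : sum_f_R0 (face_point n k e c y) n = INR (S n) * c + rsum k y.
Proof.
  rewrite (sum_f_R0_ext _ _ (fun i => c + rsum k (fun l => if Nat.eq_dec (e l) i then y l else 0))).
  2:{ intros i Hi. unfold face_point. destruct (le_dec i n); [auto|lia]. }
  rewrite sum_plus, sum_cte, sum_f_R0_rsum, (rsum_ext _ _ y); [ring|].
  intros l Hl. apply sum_f_R0_indicator, e_le; auto.
Qed.

Lemma face_point_compl c y l : (l < k)%nat -> face_point n k e c y (e l) = c + y l.
Proof.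
  intros Hl. destruct He as [_ [Einj _]]. unfold face_point.
  destruct (le_dec (e l) n); [|pose proof (e_le l Hl); lia].
  f_equal. rewrite (rsum_ext _ _ (fun l' => if Nat.eq_dec l' l then y l else 0)).
  - apply rsum_indicator; auto.
  - intros l' Hl'. destruct (Nat.eq_dec (e l') (e l)) as [Ee|Ee], (Nat.eq_dec l' l) as [El|El]; subst; auto.
    + exfalso; apply El; apply Einj; auto.
    + exfalso; apply Ee; auto.
Qed.

Lemma face_point_J c y j : In j J -> face_point n k e c y j = c.
Proof.
  intros Hj. unfold face_point. destruct (le_dec j n) as [Hle|]; [|specialize (HJn j Hj); lia].
  rewrite rsum_eq0; [ring|]. intros l Hl. destruct (Nat.eq_dec (e l) j); auto.
  subst. exfalso; apply (proj1 He l Hl); auto.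
Qed.

Lemma face_point_out c y i : (n < i)%nat -> face_point n k e c y i = 0.
Proof. intro H. unfold face_point. destruct (le_dec i n); [lia|auto]. Qed.

Lemma face_point_ge c y i : (forall l, (l < k)%nat -> 0 <= y l) -> (i <= n)%nat ->
  c <= face_point n k e c y i.
Proof.
  intros H Hi. unfold face_point. destruct (le_dec i n) as [Hle|]; [|lia].
  assert (0 <= rsum k (fun l => if Nat.eq_dec (e l) i then y l else 0)); [|lra].
  apply rsum_nonneg. intros l Hl. destruct (Nat.eq_dec (e l) i); auto; lra.
Qed.

Lemma face_point_ext c c' y y' : c = c' -> (forall l, (l < k)%nat -> y l = y' l) ->
  face_point n k e c y = face_point n k e c' y'.
Proof.
  intros <- H. apply functional_extensionality; intro i. unfold face_point.
  destruct (le_dec i n) as [Hi|Hi]; auto. f_equal. apply rsum_ext. intros l Hl. rewrite H; auto.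
Qed.

Lemma cube_to_face_ext v w : (forall l, (l < k)%nat -> v l = w l) -> cube_to_face n k e v = cube_to_face n k e w.
Proof.
  intros H. unfold cube_to_face. apply face_point_ext; [rewrite (rmax_ext k v w); auto|].
  apply renorm_ext; auto.
Qed.

Lemma in_face_rmin x j : in_face n J x -> In j J -> x j = rmin n x.
Proof.
  intros [_ HF] Hj. apply Rle_antisym; [|apply rmin_le; auto].
  destruct (rmin_attained n x) as [i [Hi ->]]. apply HF; auto.
Qed.

Lemma in_face_face_point x : in_face n J x -> x = face_point n k e (rmin n x) (fun l => gap n x (e l)).
Proof.
  intros Hx. destruct He as [_ [_ Esurj]]. apply functional_extensionality; intro i.
  destruct (le_dec i n) as [Hi|Hi].
  - destruct (in_dec Nat.eq_dec i J) as [HiJ|HiJ].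
    + rewrite face_point_J by auto. apply in_face_rmin; auto.
    + destruct (Esurj i Hi HiJ) as [l [Hl <-]]. rewrite face_point_compl by auto. unfold gap; ring.
  - rewrite face_point_out by lia. apply (proj1 (proj2 (proj1 Hx))). lia.
Qed.

Lemma in_face_gap_sum x : in_face n J x ->
  rsum k (fun l => gap n x (e l)) = 1 - INR (S n) * rmin n x.
Proof.
  intros Hx. pose proof (proj2 (proj2 (proj1 Hx))) as Hsum.
  rewrite (in_face_face_point x Hx), face_point_sum in Hsum at 1. lra.
Qed.

Lemma cube_to_face_ge v i : in_cube k v -> (i <= n)%nat ->
  (1 - rmax k v) / INR (S n) <= cube_to_face n k e v i.
Proof. intros Hv Hi. apply face_point_ge; auto. intros; apply renorm_bound; auto. Qed.

Lemma cube_to_face_simplex v : in_cube k v -> in_simplex n (cube_to_face n k e v).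
Proof.
  intros Hv. assert (HM := in_cube_rmax k v Hv). assert (Hn : 0 < INR (S n)) by (apply lt_0_INR; lia).
  assert (Hm : 0 <= (1 - rmax k v) / INR (S n)) by (apply Rdiv_nonneg; lra).
  assert (Hs : sum_f_R0 (cube_to_face n k e v) n = 1).
  { unfold cube_to_face. rewrite face_point_sum, renorm_sum by auto. field. lra. }
  assert (Hnn : forall i, (i <= n)%nat -> 0 <= cube_to_face n k e v i).
  { intros i Hi. eapply Rle_trans; [apply Hm|]. apply cube_to_face_ge; auto. }
  split; [|split]; auto.
  - intros i Hi. split; auto. rewrite <- Hs. apply sum_f_R0_ge; auto.
  - intros i Hi. apply face_point_out; auto.
Qed.

Lemma cube_to_face_J v j : In j J -> cube_to_face n k e v j = (1 - rmax k v) / INR (S n).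
Proof. intros Hj. apply face_point_J; auto. Qed.

Lemma cube_to_face_in_face v : in_cube k v -> in_face n J (cube_to_face n k e v).
Proof.
  intros Hv. split; [apply cube_to_face_simplex; auto|].
  intros j Hj i Hi. rewrite cube_to_face_J by auto. apply cube_to_face_ge; auto.
Qed.

Lemma cube_to_face_rmin v : in_cube k v -> rmin n (cube_to_face n k e v) = (1 - rmax k v) / INR (S n).
Proof.
  intros Hv. rewrite <- (in_face_rmin _ j0 (cube_to_face_in_face v Hv) Hj0). apply cube_to_face_J; auto.
Qed.

Lemma cube_to_face_Delta_j v j : in_cube k v -> In j J -> in_Delta_j n j (cube_to_face n k e v).
Proof.
  intros Hv Hj. destruct (cube_to_face_in_face v Hv) as [Hs HF]. split; auto.
Qed.

Lemma cube_to_face_gap v l : in_cube k v -> (l < k)%nat ->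
  gap n (cube_to_face n k e v) (e l) = renorm k v l.
Proof.
  intros Hv Hl. unfold gap. rewrite cube_to_face_rmin by auto.
  unfold cube_to_face. rewrite face_point_compl by auto. ring.
Qed.

(** Facets [v_l = 0] of the cube go to [Delta_(e l)], facets [v_l = 1] to [x_j0 = 0]. *)
Lemma cube_to_face_vanishing v l : in_cube k v -> (l < k)%nat -> (v l = 0 \/ v l = 1) ->
  vanishing_locus n J (cube_to_face n k e v).
Proof.
  intros Hv Hl Hvl. assert (HS := cube_to_face_simplex v Hv).
  destruct Hvl as [E|E].
  - right. exists (e l). destruct (proj1 He l Hl) as [Hel HelJ].
    split; auto. split; auto. split; auto. intros i Hi.
    unfold cube_to_face at 1. rewrite face_point_compl by auto.
    unfold renorm. rewrite E. unfold Rdiv. rewrite !Rmult_0_l, Rplus_0_r.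
    apply cube_to_face_ge; auto.
  - left. split; auto. exists j0. split; auto. rewrite cube_to_face_J by auto.
    replace (rmax k v) with 1; [unfold Rdiv; ring|].
    apply Rle_antisym; [rewrite <- E; apply rmax_ge; auto|apply in_cube_rmax; auto].
Qed.

Lemma face_to_cube_cube_to_face v l : in_cube k v -> (l < k)%nat ->
  face_to_cube n k e (cube_to_face n k e v) l = v l.
Proof.
  intros Hv Hl. unfold face_to_cube.
  rewrite cube_to_face_gap, (rsum_ext _ _ (renorm k v)), (rmax_ext _ _ (renorm k v)), renorm_sum
    by (auto; intros; apply cube_to_face_gap; auto).
  destruct (Req_dec (rsum k v) 0) as [E|E].
  - unfold renorm. rewrite (in_cube_rsum_eq0 k v Hv E) by auto. unfold Rdiv; ring.
  - assert (HM : rmax k v <> 0).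
    { intro HM. apply E, rsum_eq0, rmax_eq0_inv; auto. intros l' Hl'; apply Hv; auto. }
    assert (HS : 0 <= rsum k v) by (apply rsum_nonneg; intros; apply Hv; auto).
    rewrite (rmax_ext k (renorm k v) (fun l => (rmax k v / rsum k v) * v l))
      by (intros; unfold renorm, Rdiv; ring).
    rewrite rmax_scale by (apply Rdiv_nonneg; [apply rmax_ge0|lra]).
    unfold renorm. field. auto.
Qed.

(** On [F_J], [face_to_cube x] is the gap vector scaled by [W/Y]; its maximum is
    [W = 1 - (n+1) min x], which is what [cube_to_face] needs to recover [min x]. *)
Lemma cube_to_face_face_to_cube x : in_face n J x ->
  in_cube k (face_to_cube n k e x) /\ cube_to_face n k e (face_to_cube n k e x) = x.
Proof.
  intros Hx. set (y := fun l => gap n x (e l)).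
  set (W := rsum k y). set (Y := rmax k y).
  assert (Hy0 : forall l, (l < k)%nat -> 0 <= y l) by (intros; unfold y; apply gap_nonneg, e_le; auto).
  assert (HW : W = 1 - INR (S n) * rmin n x) by apply in_face_gap_sum, Hx.
  assert (Hmn : 0 <= rmin n x) by (apply rmin_glb; intros; apply (proj1 (proj1 Hx)); auto).
  assert (Hn : 0 < INR (S n)) by (apply lt_0_INR; lia).
  assert (HP : forall l, face_to_cube n k e x l = (W / Y) * y l).
  { intros l. unfold face_to_cube. fold y. fold W Y. change (gap n x (e l)) with (y l). unfold Rdiv; ring. }
  assert (HY0 : 0 <= Y) by apply rmax_ge0.
  assert (HYW : Y <= W) by (apply rmax_le_rsum; auto).
  assert (HWY : 0 <= W / Y) by (apply Rdiv_nonneg; lra).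
  assert (HMP : rmax k (face_to_cube n k e x) = W).
  { rewrite (rmax_ext _ _ (fun l => (W / Y) * y l)), rmax_scale by auto. fold Y.
    destruct (Req_dec Y 0) as [EY|EY]; [|field; auto].
    rewrite EY. unfold W. rewrite rsum_eq0; [ring|]. apply rmax_eq0_inv; auto. }
  split.
  - intros l Hl. rewrite HP. split; [apply Rmult_le_pos; auto|].
    destruct (Req_dec Y 0) as [EY|EY]; [rewrite EY; unfold Rdiv; rewrite Rinv_0; nra|].
    assert (y l <= Y) by (apply rmax_ge; auto).
    apply Rle_trans with (W / Y * Y); [apply Rmult_le_compat_l; auto|].
    replace (W / Y * Y) with W by (field; auto). nra.
  - rewrite (in_face_face_point x Hx) at 2. unfold cube_to_face. apply face_point_ext.
    + rewrite HMP. apply Rmult_eq_reg_l with (INR (S n)); [|lra]. field_simplify; lra.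
    + intros l Hl. unfold renorm. rewrite HMP, (rsum_ext _ _ (fun l => (W / Y) * y l)), rsum_scale by auto.
      rewrite HP. fold y W.
      destruct (Req_dec W 0) as [EW|EW].
      * assert (Hyl : y l = 0) by (apply (rsum_eq0_inv k y); auto).
        change (gap n x (e l)) with (y l). rewrite Hyl, EW. unfold Rdiv; ring.
      * assert (Y <> 0) by (intro EY; apply EW; unfold W; apply rsum_eq0, rmax_eq0_inv; auto).
        change (gap n x (e l)) with (y l). field. auto.
Qed.

Lemma face_to_cube_bound x l : (l < k)%nat ->
  0 <= face_to_cube n k e x l <= rsum k (fun l => gap n x (e l)).
Proof.
  intros Hl. unfold face_to_cube. set (y := fun l => gap n x (e l)). change (gap n x (e l)) with (y l).
  assert (Hy : forall l, (l < k)%nat -> 0 <= y l) by (intros; unfold y; apply gap_nonneg, e_le; auto).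
  assert (HW : 0 <= rsum k y) by (apply rsum_nonneg; auto).
  destruct (ratio_bound (y l) (rmax k y)) as [R1 R2]; [split; [auto|apply rmax_ge; auto]|].
  replace (y l * rsum k y / rmax k y) with (rsum k y * (y l / rmax k y)) by (unfold Rdiv; ring).
  split; [nra|]. rewrite <- (Rmult_1_r (rsum k y)) at 2. apply Rmult_le_compat_l; lra.
Qed.

Lemma rcont_at_face_to_cube l P x0 : (l < k)%nat -> rcont_at (S n) P (fun x => face_to_cube n k e x l) x0.
Proof.
  intros Hl. set (y := fun x l => gap n x (e l)).
  assert (Hy : forall l, (l < k)%nat -> rcont_at (S n) P (fun x => y x l) x0).
  { intros l' Hl'. apply rcont_at_gap; [lia|]. pose proof (e_le l' Hl'). lia. }
  assert (HW : rcont_at (S n) P (fun x => rsum k (y x)) x0)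
    by (apply (rcont_at_rsum _ _ _ k (fun l x => y x l)); auto).
  destruct (Req_dec (rmax k (y x0)) 0) as [E|E].
  - assert (Hy0 : forall l, (l < k)%nat -> y x0 l = 0)
      by (apply rmax_eq0_inv; auto; intros; unfold y; apply gap_nonneg, e_le; auto).
    apply (rcont_at_squeeze0 _ _ _ _ (fun x => rsum k (y x))); auto.
    + intros x _. apply face_to_cube_bound; auto.
    + unfold face_to_cube. fold (y x0). rewrite E. unfold Rdiv. rewrite Rinv_0. ring.
    + apply rsum_eq0; auto.
  - unfold face_to_cube. fold (y x0).
    apply rcont_at_div; [apply rcont_at_mult; [apply (Hy l Hl)|exact HW]| |exact E].
    apply (rcont_at_rmax _ _ _ k (fun l x => y x l)); auto.
Qed.

Lemma rcont_at_renorm_clamp01 l v0 : (l < k)%nat ->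
  rcont_at k (fun _ => True) (fun v => renorm k (clamp01 v) l) v0.
Proof.
  intros Hl.
  assert (Hc : forall l, (l < k)%nat -> rcont_at k (fun _ => True) (fun v => clamp01 v l) v0)
    by (intros; apply rcont_at_clamp01; auto).
  assert (HM : rcont_at k (fun _ => True) (fun v => rmax k (clamp01 v)) v0)
    by (apply (rcont_at_rmax _ _ _ k (fun l v => clamp01 v l)); auto).
  destruct (Req_dec (rsum k (clamp01 v0)) 0) as [E|E].
  - assert (Z := in_cube_rsum_eq0 k _ (clamp01_in_cube k v0) E).
    apply (rcont_at_squeeze0 _ _ _ _ (fun v => rmax k (clamp01 v))); auto.
    + intros v _. apply renorm_bound; auto. apply clamp01_in_cube.
    + unfold renorm. rewrite Z by auto. unfold Rdiv; ring.
    + apply rmax_eq0; auto.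
  - unfold renorm. apply rcont_at_div; auto; [apply rcont_at_mult; auto|].
    apply (rcont_at_rsum _ _ _ k (fun l v => clamp01 v l)); auto.
Qed.

Lemma rcont_at_cube_to_face_clamp01 i v0 :
  rcont_at k (fun _ => True) (fun v => cube_to_face n k e (clamp01 v) i) v0.
Proof.
  unfold cube_to_face, face_point. destruct (le_dec i n) as [Hi|Hi]; [|apply rcont_at_const].
  apply rcont_at_plus.
  - apply rcont_at_div; [|apply rcont_at_const|apply not_0_INR; lia].
    apply rcont_at_minus; [apply rcont_at_const|].
    apply (rcont_at_rmax _ _ _ k (fun l v => clamp01 v l)). intros; apply rcont_at_clamp01; auto.
  - apply (rcont_at_rsum _ _ _ k (fun l v => if Nat.eq_dec (e l) i then renorm k (clamp01 v) l else 0)).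
    intros l Hl. destruct (Nat.eq_dec (e l) i); [apply rcont_at_renorm_clamp01; auto|apply rcont_at_const].
Qed.

End CubeFace.

(** * Pointwise continuity of [A]-valued functions *)

Definition acont_at {A : CStarAlg} (N : nat) (P : (nat -> R) -> Prop) (F : (nat -> R) -> A)
    (x0 : nat -> R) :=
  forall eps, 0 < eps -> exists d, 0 < d /\
    forall x, P x -> close_vec N d x x0 -> cdist (F x) (F x0) < eps.

Section AlgebraContinuity.
Context {A : CStarAlg}.
Variables (N : nat) (P : (nat -> R) -> Prop) (x0 : nat -> R).
Implicit Types F : (nat -> R) -> A.

Lemma acont_at_comp k F (Phi : (nat -> R) -> nat -> R) :
  acont_at k (fun _ => True) F (Phi x0) -> (forall l, (l < k)%nat -> rcont_at N P (fun x => Phi x l) x0) ->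
  acont_at N P (fun x => F (Phi x)) x0.
Proof.
  intros H1 H2 eps Heps. destruct (H1 eps Heps) as [d [Hd K]].
  destruct (rcont_at_uniform N P x0 k (fun l x => Phi x l) H2 d Hd) as [d2 [Hd2 K2]].
  exists d2; split; auto. intros x Px Hx. apply K; auto. intros l Hl. apply K2; auto.
Qed.

Lemma acont_at_rscal (r : (nat -> R) -> R) F :
  rcont_at N P r x0 -> acont_at N P F x0 -> acont_at N P (fun x => cscal (mkC (r x) 0) (F x)) x0.
Proof.
  intros Hr HF eps Heps.
  set (B := cnorm (F x0) + 1). assert (HB : 0 < B) by (unfold B; pose proof (cnorm_nonneg A (F x0)); lra).
  set (C := Rabs (r x0) + 1). assert (HC : 0 < C) by (unfold C; pose proof (Rabs_pos (r x0)); lra).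
  destruct (Hr (eps / (2 * B))) as [d1 [Hd1 K1]]; [apply Rdiv_lt_0_compat; lra|].
  destruct (HF (Rmin 1 (eps / (2 * C)))) as [d2 [Hd2 K2]]; [apply Rmin_pos; [lra|apply Rdiv_lt_0_compat; lra]|].
  exists (Rmin d1 d2). split; [apply Rmin_pos; auto|]. intros x Px Hx.
  specialize (K1 x Px (close_vec_mono _ _ _ _ _ (Rmin_l _ _) Hx)).
  specialize (K2 x Px (close_vec_mono _ _ _ _ _ (Rmin_r _ _) Hx)).
  pose proof (Rmin_l 1 (eps / (2 * C))). pose proof (Rmin_r 1 (eps / (2 * C))).
  assert (Hn : cnorm (F x) < B).
  { pose proof (cdist_tri (F x) (F x0) c0) as T. rewrite !cdist_c0 in T. unfold B. lra. }
  assert (T1 : Rabs (r x - r x0) * cnorm (F x) < eps / 2).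
  { apply Rle_lt_trans with (Rabs (r x - r x0) * B).
    - apply Rmult_le_compat_l; [apply Rabs_pos|lra].
    - replace (eps / 2) with (eps / (2 * B) * B) by (field; lra). apply Rmult_lt_compat_r; auto. }
  assert (T2 : Rabs (r x0) * cdist (F x) (F x0) <= eps / 2).
  { replace (eps / 2) with (C * (eps / (2 * C))) by (field; lra).
    apply Rmult_le_compat; [apply Rabs_pos|apply cnorm_nonneg|unfold C; lra|lra]. }
  eapply Rle_lt_trans; [apply cdist_rscal|]. lra.
Qed.

Lemma acont_at_rscal_vanishing (r : (nat -> R) -> R) F :
  (forall x, P x -> 0 <= r x <= 1) -> F x0 = c0 -> acont_at N P F x0 ->
  acont_at N P (fun x => cscal (mkC (r x) 0) (F x)) x0.
Proof.
  intros Hr HF0 HF eps Heps. destruct (HF eps Heps) as [d [Hd K]]. exists d; split; auto.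
  intros x Px Hx. specialize (K x Px Hx). rewrite HF0, cdist_c0 in K.
  rewrite HF0, cscal_c0, cdist_c0, cnorm_rscal. specialize (Hr x Px). rewrite Rabs_right by lra.
  pose proof (cnorm_nonneg A (F x)). nra.
Qed.

End AlgebraContinuity.

Lemma cont_on_simplex_acont_at {A : CStarAlg} n (f : SFun A) x0 :
  cont_on_simplex n f -> in_simplex n x0 -> acont_at (S n) (in_simplex n) f x0.
Proof.
  intros H Hx eps Heps. destruct (H x0 Hx eps Heps) as [d [Hd K]]. exists d; split; auto.
  intros x Px Hxx. apply K; auto. intros i Hi. apply Hxx. lia.
Qed.

Lemma cont_on_simplex_of_acont_at {A : CStarAlg} n (f F : SFun A) :
  (forall x0, in_simplex n x0 -> acont_at (S n) (in_simplex n) F x0) ->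
  (forall x, in_simplex n x -> f x = F x) -> cont_on_simplex n f.
Proof.
  intros H E x0 Hx eps Heps. destruct (H x0 Hx eps Heps) as [d [Hd K]]. exists d; split; auto.
  intros y Hy Hyy. rewrite !E by auto. apply K; auto. intros i Hi. apply Hyy. lia.
Qed.

(** * Elements of [S^k] as functions on [R^k] *)

Notation Tn k := (Compactness.Tn k R).

Fixpoint susp_of_fun {A : CStarAlg} (k : nat) : (Tn k -> A) -> STy A k :=
  match k return (Tn k -> A) -> STy A k with
  | O => fun F => F tt
  | S k' => fun F t => susp_of_fun k' (fun r => F (t, r))
  end.

Fixpoint fun_of_susp {A : CStarAlg} (k : nat) : STy A k -> Tn k -> A :=
  match k return STy A k -> Tn k -> A with
  | O => fun h _ => h
  | S k' => fun h z => fun_of_susp k' (h (fst z)) (snd z)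
  end.

Fixpoint coords (k : nat) : Tn k -> nat -> R :=
  match k return Tn k -> nat -> R with
  | O => fun _ _ => 0
  | S k' => fun z l => match l with O => fst z | S l' => coords k' (snd z) l' end
  end.

Fixpoint tuple_of (k : nat) (v : nat -> R) : Tn k :=
  match k return Tn k with
  | O => tt
  | S k' => (v O, tuple_of k' (fun l => v (S l)))
  end.

Definition off_open_cube (k : nat) (z : Tn k) :=
  exists l, (l < k)%nat /\ (coords k z l <= 0 \/ 1 <= coords k z l).

Definition unif_cont {A : CStarAlg} (k : nat) (F : Tn k -> A) :=
  forall eps, 0 < eps -> exists d, 0 < d /\
    forall z z', Compactness.close_n k d z z' -> cdist (F z) (F z') <= eps.

Section SuspensionOfFunction.
Context {A : CStarAlg}.

Lemma susp_of_fun_add k (F G : Tn k -> A) :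
  susp_of_fun k (fun z => cadd (F z) (G z)) = ST_add k (susp_of_fun k F) (susp_of_fun k G).
Proof. induction k; simpl; auto. apply functional_extensionality; intro t. apply IHk. Qed.

Lemma susp_of_fun_scal k a (F : Tn k -> A) :
  susp_of_fun k (fun z => cscal a (F z)) = ST_scal k a (susp_of_fun k F).
Proof. induction k; simpl; auto. apply functional_extensionality; intro t. apply IHk. Qed.

Lemma susp_of_fun_mul k (F G : Tn k -> A) :
  susp_of_fun k (fun z => cmul (F z) (G z)) = ST_mul k (susp_of_fun k F) (susp_of_fun k G).
Proof. induction k; simpl; auto. apply functional_extensionality; intro t. apply IHk. Qed.

Lemma susp_of_fun_star k (F : Tn k -> A) :
  susp_of_fun k (fun z => cstar (F z)) = ST_star k (susp_of_fun k F).
Proof. induction k; simpl; auto. apply functional_extensionality; intro t. apply IHk. Qed.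

Lemma susp_of_fun_zero k : susp_of_fun k (fun _ => @c0 A) = ST_zero k.
Proof. induction k; simpl; auto. apply functional_extensionality; intro t. apply IHk. Qed.

Lemma susp_of_fun_eq_zero k (F : Tn k -> A) : susp_of_fun k F = ST_zero k -> forall z, F z = c0.
Proof.
  induction k; simpl; intros H z; [destruct z; auto|].
  destruct z as [t r]. apply (IHk (fun r => F (t, r))).
  change (susp_of_fun k (fun r => F (t, r))) with ((fun t => susp_of_fun k (fun r => F (t, r))) t).
  rewrite H. reflexivity.
Qed.

Lemma susp_of_funK k (h : STy A k) : susp_of_fun k (fun_of_susp k h) = h.
Proof. induction k; simpl; auto. apply functional_extensionality; intro t. apply IHk. Qed.

Lemma fun_of_susp_zero k z : fun_of_susp k (@ST_zero A k) z = c0.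
Proof. induction k; simpl; auto. Qed.

Lemma distle_refl k (a : STy A k) e : 0 <= e -> ST_distle k a a e.
Proof. induction k; simpl; intros; [rewrite cdist_self; lra|]. apply IHk; auto. Qed.

Lemma distle_susp_of_fun k (F G : Tn k -> A) e :
  (forall z, cdist (F z) (G z) <= e) -> ST_distle k (susp_of_fun k F) (susp_of_fun k G) e.
Proof. induction k; simpl; intro H; auto. Qed.

Lemma fun_of_susp_distle k (a b : STy A k) e :
  ST_distle k a b e -> forall z, cdist (fun_of_susp k a z) (fun_of_susp k b z) <= e.
Proof. revert a b; induction k; simpl; intros a b H z; auto. Qed.

Lemma inSusp_zero (D : A -> Prop) k : D c0 -> inSusp A D k (ST_zero k).
Proof.
  intro HD. induction k; simpl; auto. split; [|split]; auto.
  intros t Ht eps Heps. exists 1. split; [lra|]. intros. apply distle_refl; lra.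
Qed.

Lemma inSusp_at (D : A -> Prop) k (h : STy A (S k)) t : D c0 -> inSusp A D (S k) h -> inSusp A D k (h t).
Proof.
  intros HD [H1 [H2 _]]. destruct (Rle_dec 0 t), (Rle_dec t 1).
  - apply H1; lra.
  - rewrite H2 by lra. apply inSusp_zero; auto.
  - rewrite H2 by lra. apply inSusp_zero; auto.
  - lra.
Qed.

Lemma close_n_refl k d z : 0 < d -> Compactness.close_n k d z z.
Proof. induction k; simpl; auto. destruct z as [t r]. intro. split; auto. rewrite Rminus_diag, Rabs_R0; auto. Qed.

Lemma close_n_mono k d d' z z' : d <= d' -> Compactness.close_n k d z z' -> Compactness.close_n k d' z z'.
Proof.
  revert z z'. induction k; simpl; auto.
  intros [a b] [a0 b0] Hd [X Y]. split; [lra|]. apply IHk; auto.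
Qed.

Lemma inSusp_susp_of_fun (D : A -> Prop) k (F : Tn k -> A) :
  (forall z, D (F z)) -> (forall z, off_open_cube k z -> F z = c0) -> unif_cont k F ->
  inSusp A D k (susp_of_fun k F).
Proof.
  revert F. induction k; simpl; intros F H1 H2 H3; auto.
  split; [|split].
  - intros t Ht. apply IHk.
    + intros; apply H1.
    + intros r [l [Hl Hr]]. apply H2. exists (S l). split; [lia|]. simpl; auto.
    + intros eps Heps. destruct (H3 eps Heps) as [d [Hd K]]. exists d; split; auto.
      intros z z' Hz. apply K. simpl. split; auto. rewrite Rminus_diag, Rabs_R0; auto.
  - intros t Ht. rewrite <- susp_of_fun_zero. f_equal. apply functional_extensionality; intro r.
    apply H2. exists 0%nat. split; [lia|]. simpl; auto.
  - intros t Ht eps Heps. destruct (H3 eps Heps) as [d [Hd K]]. exists d; split; auto.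
    intros s Hs Hst. apply distle_susp_of_fun. intro r. apply K. simpl. split; auto. apply close_n_refl; auto.
Qed.

Lemma fun_of_susp_in (D : A -> Prop) k h : D c0 -> inSusp A D k h -> forall z, D (fun_of_susp k h z).
Proof.
  revert h; induction k; simpl; intros h HD H z; auto.
  destruct z as [t r]. apply IHk; auto. apply (inSusp_at D k h t); auto.
Qed.

Lemma fun_of_susp_off_cube (D : A -> Prop) k h : inSusp A D k h ->
  forall z, off_open_cube k z -> fun_of_susp k h z = c0.
Proof.
  revert h; induction k; simpl; intros h H z [l [Hl Hz]]; [lia|].
  destruct H as [H1 [H2 H3]]. destruct z as [t r]. simpl in *.
  destruct (Rle_dec 0 t), (Rle_dec t 1), l; try (rewrite H2 by lra; apply fun_of_susp_zero).
  apply (IHk (h t)); [apply H1; lra|]. exists l. split; [lia|auto].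
Qed.

(** [inSusp] asks for continuity on [[0,1]] only; vanishing outside gives it on all of [R]. *)
Lemma inSusp_cont_first (D : A -> Prop) k (h : STy A (S k)) : inSusp A D (S k) h ->
  forall t0 eps, 0 < eps -> exists d, 0 < d /\ forall s, Rabs (s - t0) < d -> ST_distle k (h s) (h t0) eps.
Proof.
  intros [H1 [H2 H3]] t0 eps Heps.
  assert (Hout : forall s, s <= 0 \/ 1 <= s -> h s = h (Rmin 1 (Rmax 0 s)))
    by (intros s Hs; rewrite !H2; auto; unfold Rmin, Rmax; repeat destruct Rle_dec; lra).
  destruct (Rle_dec 0 t0), (Rle_dec t0 1).
  - destruct (H3 t0 ltac:(lra) eps Heps) as [d [Hd K]]. exists d; split; auto.
    intros s Hs. destruct (Rle_dec 0 s), (Rle_dec s 1); [apply K; auto| | |lra];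
      rewrite Hout by lra; apply K; unfold Rmin, Rmax; repeat destruct Rle_dec;
      try lra; revert Hs; unfold Rabs; repeat destruct Rcase_abs; lra.
  - exists (t0 - 1). split; [lra|]. intros s Hs.
    rewrite (H2 s), (H2 t0) by (revert Hs; unfold Rabs; repeat destruct Rcase_abs; lra). apply distle_refl; lra.
  - exists (- t0). split; [lra|]. intros s Hs.
    rewrite (H2 s), (H2 t0) by (revert Hs; unfold Rabs; repeat destruct Rcase_abs; lra). apply distle_refl; lra.
  - lra.
Qed.

Lemma fun_of_susp_cont (D : A -> Prop) k h : D c0 -> inSusp A D k h ->
  forall z0 eps, 0 < eps -> exists d, 0 < d /\
    forall z, Compactness.close_n k d z z0 -> cdist (fun_of_susp k h z) (fun_of_susp k h z0) < eps.
Proof.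
  revert h; induction k; simpl; intros h HD H z0 eps Heps.
  - exists 1. split; [lra|]. intros. rewrite cdist_self; auto.
  - destruct z0 as [t0 r0].
    destruct (inSusp_cont_first D k h H t0 (eps / 2)) as [d1 [Hd1 K1]]; [lra|].
    destruct (IHk (h t0) HD (inSusp_at D k h t0 HD H) r0 (eps / 2)) as [d2 [Hd2 K2]]; [lra|].
    exists (Rmin d1 d2). split; [apply Rmin_pos; auto|].
    intros [t r] [Htt Hrr]. simpl.
    pose proof (fun_of_susp_distle k _ _ _ (K1 t (Rlt_le_trans _ _ _ Htt (Rmin_l _ _))) r).
    pose proof (K2 r (close_n_mono _ _ _ _ _ (Rmin_r _ _) Hrr)).
    pose proof (cdist_tri (fun_of_susp k (h t) r) (fun_of_susp k (h t0) r) (fun_of_susp k (h t0) r0)). lra.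
Qed.

End SuspensionOfFunction.

Lemma tuple_of_coords k z : tuple_of k (coords k z) = z.
Proof. induction k; simpl; destruct z; auto. f_equal. apply IHk. Qed.

Lemma coords_tuple_of k v l : (l < k)%nat -> coords k (tuple_of k v) l = v l.
Proof.
  revert v l; induction k; simpl; intros v l Hl; [lia|].
  destruct l; auto. rewrite IHk by lia. auto.
Qed.

Lemma tuple_of_ext k v w : (forall l, (l < k)%nat -> v l = w l) -> tuple_of k v = tuple_of k w.
Proof.
  revert v w; induction k; simpl; intros v w H; auto. f_equal; [apply H; lia|]. apply IHk. intros; apply H; lia.
Qed.

Lemma close_n_coords k d z z0 : Compactness.close_n k d z z0 -> close_vec k d (coords k z) (coords k z0).
Proof.
  induction k; simpl; intros H l Hl; [lia|]. destruct z as [t r], z0 as [t0 r0]. destruct H as [H1 H2].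
  destruct l; simpl; auto. apply IHk; auto; lia.
Qed.

Lemma close_n_tuple_of k d v w : close_vec k d v w -> Compactness.close_n k d (tuple_of k v) (tuple_of k w).
Proof.
  revert v w; induction k; simpl; intros v w H; auto. split.
  - apply H; lia.
  - apply IHk. intros l Hl. apply H; lia.
Qed.

Lemma bounded_n_in_cube k z :
  Compactness.bounded_n k (tuple_of k (fun _ => 0)) (tuple_of k (fun _ => 1)) z <-> in_cube k (coords k z).
Proof.
  induction k; simpl.
  - split; auto. intros _ l Hl; lia.
  - destruct z as [t r]. split.
    + intros [H1 H2] l Hl. destruct l; simpl; auto. apply IHk in H2. apply H2; lia.
    + intro H. split; [apply (H 0%nat); lia|]. apply IHk. intros l Hl. apply (H (S l)); lia.
Qed.

(** Heine-Cantor on the compact cube, in the form needed here: precomposing with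
    the retraction [clamp01] makes a function continuous on [[0,1]^k] uniformly
    continuous on all of [R^k]. *)
Lemma unif_cont_clamp01 {A : CStarAlg} k (G : (nat -> R) -> A) :
  (forall v0, in_cube k v0 -> acont_at k (fun _ => True) G v0) -> unif_cont k (fun z => G (clamp01 (coords k z))).
Proof.
  intros HG eps Heps.
  assert (Hd : forall z : Tn k, {d : RIneq.posreal | in_cube k (coords k z) ->
     forall v, close_vec k (2 * d) v (coords k z) -> cdist (G v) (G (coords k z)) < eps / 2}).
  { intro z. destruct (excluded_middle_informative (in_cube k (coords k z))) as [Hc|Hc].
    - apply constructive_indefinite_description.
      destruct (HG _ Hc (eps / 2)) as [d [Hd K]]; [lra|].
      assert (Hp : 0 < d / 2) by lra. exists (RIneq.mkposreal _ Hp). intros _ v Hv. apply K; auto.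
      simpl in Hv. replace (2 * (d / 2)) with d in Hv by field. auto.
    - exists (RIneq.mkposreal 1 Rlt_0_1). intro; contradiction. }
  set (delta := fun z => proj1_sig (Hd z)).
  destruct (Compactness.compactness_value k (tuple_of k (fun _ => 0)) (tuple_of k (fun _ => 1)) delta) as [d Hdc].
  exists d. split; [apply RIneq.cond_pos|]. intros z z' Hzz.
  set (c := clamp01 (coords k z)). set (c' := clamp01 (coords k z')).
  assert (Hcc : close_vec k d c c').
  { intros l Hl. eapply Rle_lt_trans; [apply clamp01_lipschitz|]. apply close_n_coords; auto. }
  assert (Hb : Compactness.bounded_n k (tuple_of k (fun _ => 0)) (tuple_of k (fun _ => 1)) (tuple_of k c)).
  { apply bounded_n_in_cube. intros l Hl. rewrite coords_tuple_of by auto. apply (clamp01_in_cube k _ l Hl). }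
  apply NNPP. intro Hne. apply (Hdc _ Hb). intros [t [Ht [Hct Hdt]]].
  apply Hne. apply bounded_n_in_cube in Ht.
  assert (P := proj2_sig (Hd t) Ht). fold (delta t) in P.
  assert (Hct' : forall l, (l < k)%nat -> Rabs (c l - coords k t l) < delta t).
  { intros l Hl. pose proof (close_n_coords _ _ _ _ Hct l Hl) as T.
    rewrite coords_tuple_of in T by auto. exact T. }
  assert (Hc1 : close_vec k (2 * delta t) c (coords k t)).
  { intros l Hl. pose proof (Hct' l Hl). pose proof (RIneq.cond_pos (delta t)). lra. }
  assert (Hc2 : close_vec k (2 * delta t) c' (coords k t)).
  { intros l Hl. pose proof (Hct' l Hl). specialize (Hcc l Hl).
    replace (c' l - coords k t l) with ((c l - coords k t l) - (c l - c' l)) by ring.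
    eapply Rle_lt_trans; [apply Rabs_triang|]. rewrite Rabs_Ropp. simpl in Hdt. lra. }
  pose proof (P c Hc1). pose proof (P c' Hc2).
  pose proof (cdist_tri (G c) (G (coords k t)) (G c')). rewrite (cdist_sym (G (coords k t))) in *. lra.
Qed.

(** * The restriction map [B_J -> S^(n-p)(I_J)] *)

Definition compl_list (n : nat) (J : list nat) : list nat :=
  filter (fun i => if in_dec Nat.eq_dec i J then false else true) (seq 0 (S n)).

Lemma in_compl_list n J i : In i (compl_list n J) <-> (i <= n)%nat /\ ~ In i J.
Proof.
  unfold compl_list. rewrite filter_In, in_seq.
  destruct (in_dec Nat.eq_dec i J); split; intros [H1 H2]; split; auto; try lia; discriminate.
Qed.

Lemma compl_list_length n J p : NoDup J -> (forall j, In j J -> (j <= n)%nat) -> length J = (p + 1)%nat ->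
  length (compl_list n J) = (n - p)%nat.
Proof.
  intros Hnd Hn Hl. unfold compl_list.
  pose proof (filter_length (fun i => if in_dec Nat.eq_dec i J then true else false) (seq 0 (S n))) as H.
  rewrite length_seq in H.
  rewrite (filter_ext _ (fun i => negb (if in_dec Nat.eq_dec i J then true else false)))
    by (intro i; destruct in_dec; auto).
  assert (E : length (filter (fun i => if in_dec Nat.eq_dec i J then true else false) (seq 0 (S n))) = length J).
  { apply Nat.le_antisymm; apply NoDup_incl_length; auto using NoDup_filter, seq_NoDup; intros i Hi.
    - apply filter_In in Hi. destruct Hi as [_ Hi]. destruct (in_dec Nat.eq_dec i J); auto; discriminate.
    - apply filter_In. rewrite in_seq. specialize (Hn i Hi). split; [lia|].
      destruct (in_dec Nat.eq_dec i J); auto; contradiction. }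
  lia.
Qed.

Lemma enumerates_compl_list n J :
  enumerates_compl n J (length (compl_list n J)) (fun l => nth l (compl_list n J) 0%nat).
Proof.
  split; [|split].
  - intros l Hl. apply in_compl_list, nth_In; auto.
  - intros l l' Hl Hl' E. eapply NoDup_nth; eauto. apply NoDup_filter, seq_NoDup.
  - intros i Hi HiJ. destruct (In_nth _ _ 0%nat (proj2 (in_compl_list n J i) (conj Hi HiJ))) as [l [Hl E]].
    exists l. split; auto.
Qed.

Definition face_restriction {A : CStarAlg} (n k : nat) (e : nat -> nat) (f : SFun A) : STy A k :=
  susp_of_fun k (fun z => f (cube_to_face n k e (clamp01 (coords k z)))).

Lemma inB_L_vanishing {A : CStarAlg} I n J (f : SFun A) x :
  inB_L A I n J f -> vanishing_locus n J x -> f x = c0.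
Proof.
  intros [[_ [_ [H3 _]]] H5] [Hb|[i [Hi [HiJ HD]]]]; [apply H3|apply (H5 i)]; auto.
Qed.

Lemma fold_SF_add_eq0 {A : CStarAlg} (ls : list (list nat * SFun A)) x :
  (forall Lg, In Lg ls -> snd Lg x = c0) -> fold_right (fun Lg acc => SF_add (snd Lg) acc) SF_zero ls x = c0.
Proof.
  induction ls; intro H; [reflexivity|]. cbn [fold_right]. unfold SF_add at 1.
  rewrite H by (left; auto). rewrite IHls by (intros; apply H; right; auto). apply cadd_0.
Qed.

Lemma Delta_j_rmin n j x : (j <= n)%nat -> in_Delta_j n j x -> x j = rmin n x.
Proof.
  intros Hj [_ H]. apply Rle_antisym; [|apply rmin_le; auto].
  destruct (rmin_attained n x) as [i [Hi ->]]. auto.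
Qed.

Lemma in_simplex_rmin_nonneg n x : in_simplex n x -> 0 <= rmin n x.
Proof. intros [H _]. apply rmin_glb. intros; apply H; auto. Qed.

Section FaceRestriction.
Context {A : CStarAlg}.
Variables (I : nat -> A -> Prop) (n : nat) (J : list nat) (k : nat) (e : nat -> nat).
Hypothesis HI : forall j, (j <= n)%nat -> is_Cideal A (I j).
Hypothesis He : enumerates_compl n J k e.
Hypothesis HJn : forall j, In j J -> (j <= n)%nat.
Variable j0 : nat.
Hypothesis Hj0 : In j0 J.

Let I_J (a : A) := forall j, In j J -> I j a.

Lemma I_J_c0 : I_J c0.
Proof. intros j Hj. apply (HI j (HJn j Hj)). Qed.

Lemma acont_at_face_clamp01 (f : SFun A) v0 : cont_on_simplex n f ->
  acont_at k (fun _ => True) (fun v => f (cube_to_face n k e (clamp01 v))) v0.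
Proof.
  intros Hf eps Heps.
  assert (Hs : forall v, in_simplex n (cube_to_face n k e (clamp01 v)))
    by (intro; eapply cube_to_face_simplex; eauto; apply clamp01_in_cube).
  destruct (Hf _ (Hs v0) eps Heps) as [d1 [Hd1 K1]].
  destruct (rcont_at_uniform k (fun _ => True) v0 (S n) (fun i v => cube_to_face n k e (clamp01 v) i)
     (fun i _ => rcont_at_cube_to_face_clamp01 n k e i v0) d1 Hd1) as [d [Hd K]].
  exists d; split; auto. intros v _ Hv. apply K1; auto. intros i Hi. apply K; auto; lia.
Qed.

Lemma face_restriction_in_susp (f : SFun A) : inB_L A I n J f -> inSusp A I_J k (face_restriction n k e f).
Proof.
  intros Hf. unfold face_restriction. apply inSusp_susp_of_fun.
  - intros z j Hj. apply (proj2 (proj2 (proj2 (proj1 Hf)))); auto.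
    eapply cube_to_face_Delta_j; eauto. apply clamp01_in_cube.
  - intros z [l [Hl Hz]]. apply (inB_L_vanishing I n J); auto.
    eapply cube_to_face_vanishing; eauto; [apply clamp01_in_cube|].
    destruct (clamp01_cases (coords k z) l) as [[? ?]|[[? ?]|[? ?]]]; lra.
  - rewrite <- (functional_extensionality _ _
      (fun z => f_equal (fun v => f (cube_to_face n k e v)) (clamp01_idem (coords k z)))).
    apply (unif_cont_clamp01 k (fun v => f (cube_to_face n k e (clamp01 v)))).
    intros v0 _. apply acont_at_face_clamp01, (proj1 (proj2 (proj1 Hf))).
Qed.

(** Pigeonhole: [L] misses some [j] in [J], and [F_J] lies in [Delta_j]. *)
Lemma inB_L_vanishes_on_face (L : list nat) (g : SFun A) x :
  NoDup J -> (length L < length J)%nat -> inB_L A I n L g -> in_face n J x -> g x = c0.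
Proof.
  intros HJnd Hlen [_ Hg] [Hx HF].
  destruct (classic (exists j, In j J /\ ~ In j L)) as [[j [Hj HjL]]|Hno].
  - apply (Hg j); auto. split; auto.
  - exfalso. assert (Hincl : incl J L) by (intros j Hj; apply NNPP; intro HjL; apply Hno; eauto).
    pose proof (NoDup_incl_length HJnd Hincl). lia.
Qed.

Lemma face_restriction_of_Q (f : SFun A) p : NoDup J -> length J = (p + 1)%nat ->
  inQ A I n (Z.of_nat p - 1) f -> face_restriction n k e f = ST_zero k.
Proof.
  intros HJnd HJl [ls [Hls ->]]. unfold face_restriction. rewrite <- susp_of_fun_zero. f_equal.
  apply functional_extensionality; intro z. apply fold_SF_add_eq0. intros [L g] HLg.
  rewrite Forall_forall in Hls. destruct (Hls _ HLg) as [_ [_ [HLlen HB]]]. simpl in *.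
  apply (inB_L_vanishes_on_face L); auto; [lia|]. eapply cube_to_face_in_face; eauto. apply clamp01_in_cube.
Qed.

Lemma face_restriction_eq0_vanishes_on_face (f : SFun A) :
  face_restriction n k e f = ST_zero k -> forall x, in_face n J x -> f x = c0.
Proof.
  intros Hphi x Hx. destruct (cube_to_face_face_to_cube n J k e He HJn x Hx) as [Hc Hxx].
  pose proof (susp_of_fun_eq_zero k _ Hphi (tuple_of k (face_to_cube n k e x))) as Hz.
  rewrite <- Hz, <- Hxx at 1. f_equal. apply cube_to_face_ext. intros l Hl.
  rewrite clamp01_id; rewrite coords_tuple_of; auto.
Qed.

Definition excess (x : nat -> R) : R := lsum J (gap n x).

(** Off [F_J] the weights [gap_j / excess], [j] in [J], form a partition of unity. *)
Definition face_weight (j : nat) (x : nat -> R) : R := gap n x j / excess x.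

Lemma excess_nonneg x : 0 <= excess x.
Proof. apply lsum_nonneg. intros j Hj. apply gap_nonneg; auto. Qed.

Lemma excess_eq0_in_face x : in_simplex n x -> excess x = 0 -> in_face n J x.
Proof.
  intros Hx E. split; auto. intros j Hj i Hi.
  pose proof (lsum_eq0_inv J (gap n x) (fun j Hj => gap_nonneg n x j (HJn j Hj)) E j Hj) as T.
  unfold gap in T. pose proof (rmin_le n x i Hi). lra.
Qed.

Lemma face_weight_bound j x : In j J -> 0 <= face_weight j x <= 1.
Proof.
  intros Hj. apply ratio_bound. split; [apply gap_nonneg; auto|].
  apply (lsum_ge J (gap n x)); auto. intros; apply gap_nonneg; auto.
Qed.

Lemma rcont_at_excess P x0 : rcont_at (S n) P excess x0.
Proof.
  apply (rcont_at_lsum _ _ _ J (fun j x => gap n x j)). intros j Hj.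
  apply rcont_at_gap; [lia|]. specialize (HJn j Hj). lia.
Qed.

Lemma face_weight_piece_in_B (f : SFun A) j : In j J -> inB_L A I n J f ->
  (forall x, in_face n J x -> f x = c0) ->
  inB_L A I n (remove Nat.eq_dec j J) (fun x => cscal (mkC (face_weight j x) 0) (f x)).
Proof.
  intros Hj [[Hf1 [Hf2 [Hf3 Hf4]]] Hf5] HF. split; [split; [|split; [|split]]|].
  - intros x Hx. rewrite Hf1 by auto. apply cscal_c0.
  - apply (cont_on_simplex_of_acont_at n _ (fun x => cscal (mkC (face_weight j x) 0) (f x))); [|auto].
    intros x0 Hx0. destruct (Req_dec (excess x0) 0) as [E|E].
    + apply acont_at_rscal_vanishing; [intros; apply face_weight_bound; auto| |].
      * apply HF, excess_eq0_in_face; auto.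
      * apply cont_on_simplex_acont_at; auto.
    + apply acont_at_rscal; [|apply cont_on_simplex_acont_at; auto].
      apply rcont_at_div; [|apply rcont_at_excess|auto]. apply rcont_at_gap; [lia|]. specialize (HJn j Hj). lia.
  - intros x Hx. rewrite Hf3 by auto. apply cscal_c0.
  - intros i x Hi Hx. apply (HI i Hi). apply Hf4; auto.
  - intros j' x Hj' Hnot Hx. destruct (Nat.eq_dec j' j) as [->|Hne].
    + unfold face_weight, gap. rewrite (Delta_j_rmin n j x Hj' Hx), Rminus_diag.
      unfold Rdiv. rewrite Rmult_0_l. apply cscal_0.
    + rewrite (Hf5 j' x) by (auto; intro T; apply Hnot; apply in_in_remove; auto). apply cscal_c0.
Qed.

Lemma sum_face_weight_pieces (f : SFun A) (L : list nat) x :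
  fold_right (fun Lg acc => SF_add (snd Lg) acc) SF_zero
    (map (fun j => (remove Nat.eq_dec j J, fun x => cscal (mkC (face_weight j x) 0) (f x))) L) x
  = cscal (mkC (lsum L (fun j => face_weight j x)) 0) (f x).
Proof.
  induction L; cbn [fold_right map lsum].
  - symmetry; apply cscal_0.
  - unfold SF_add at 1. cbn [snd]. rewrite IHL, cscal_raddl. reflexivity.
Qed.

Lemma vanishes_on_face_in_Q (f : SFun A) p : NoDup J -> length J = (p + 1)%nat ->
  inB_L A I n J f -> (forall x, in_face n J x -> f x = c0) -> inQ A I n (Z.of_nat p - 1) f.
Proof.
  intros HJnd HJl Hf HF.
  exists (map (fun j => (remove Nat.eq_dec j J, fun x => cscal (mkC (face_weight j x) 0) (f x))) J).
  split.
  - rewrite Forall_forall. intros [L g] HLg. apply in_map_iff in HLg.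
    destruct HLg as [j [Ej Hj]]. inversion Ej; subst L g; clear Ej. simpl.
    split; [rewrite <- remove_alt; apply NoDup_filter; auto|].
    split; [intros i Hi; apply in_remove in Hi; apply HJn; tauto|].
    split; [pose proof (remove_length_lt Nat.eq_dec J j Hj); lia|].
    apply face_weight_piece_in_B; auto.
  - apply functional_extensionality; intro x. rewrite sum_face_weight_pieces.
    destruct (excluded_middle_informative (in_simplex n x)) as [Hx|Hx].
    + destruct (Req_dec (excess x) 0) as [E|E].
      * rewrite HF by (apply excess_eq0_in_face; auto). symmetry; apply cscal_c0.
      * unfold face_weight. rewrite lsum_div. fold (excess x). unfold Rdiv. rewrite Rinv_r by auto.
        symmetry. apply cscal_1.
    + rewrite (proj1 (proj1 Hf)) by auto. symmetry; apply cscal_c0.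
Qed.

(** [1] on [F_J \ dDelta^n] and [0] on [dDelta^n]. *)
Definition face_cutoff (x : nat -> R) : R := rmin n x / (excess x + rmin n x).

Lemma face_cutoff_bound x : in_simplex n x -> 0 <= face_cutoff x <= 1.
Proof.
  intros Hx. apply ratio_bound. pose proof (in_simplex_rmin_nonneg n x Hx). pose proof (excess_nonneg x). lra.
Qed.

Lemma rcont_at_face_cutoff P x0 : excess x0 + rmin n x0 <> 0 -> rcont_at (S n) P face_cutoff x0.
Proof.
  intros E. apply rcont_at_div; auto; [apply rcont_at_rmin; lia|].
  apply rcont_at_plus; [apply rcont_at_excess|apply rcont_at_rmin; lia].
Qed.

Lemma face_cutoff_cube_to_face c : in_cube k c -> rmax k c < 1 -> face_cutoff (cube_to_face n k e c) = 1.
Proof.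
  intros Hc HM. assert (Hr := cube_to_face_rmin n J k e He HJn j0 Hj0 c Hc).
  assert (Hal : excess (cube_to_face n k e c) = 0).
  { apply lsum_eq0. intros j Hj. unfold gap. rewrite Hr, (cube_to_face_J n J k e He HJn) by auto. ring. }
  assert (Hpos : 0 < rmin n (cube_to_face n k e c)).
  { rewrite Hr. apply Rdiv_lt_0_compat; [lra|apply lt_0_INR; lia]. }
  unfold face_cutoff. rewrite Hal, Rplus_0_l. field. lra.
Qed.

Section Extension.
Variable h : STy A k.
Hypothesis Hh : inSusp A I_J k h.

Let hv (w : nat -> R) : A := fun_of_susp k h (tuple_of k w).

Lemma hv_off_cube w l : (l < k)%nat -> (w l <= 0 \/ 1 <= w l) -> hv w = c0.
Proof. intros Hl Hw. apply (fun_of_susp_off_cube I_J k h Hh). exists l. rewrite coords_tuple_of; auto. Qed.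

Lemma acont_at_hv_face_to_cube x0 : acont_at (S n) (in_simplex n) (fun x => hv (face_to_cube n k e x)) x0.
Proof.
  apply (acont_at_comp _ _ _ k hv (face_to_cube n k e)).
  - intros eps Heps. destruct (fun_of_susp_cont I_J k h I_J_c0 Hh (tuple_of k (face_to_cube n k e x0)) eps Heps)
      as [d [Hd K]].
    exists d; split; auto. intros w _ Hw. apply K, close_n_tuple_of; auto.
  - intros l Hl. eapply rcont_at_face_to_cube; eauto.
Qed.

(** A point of [F_J] on [dDelta^n] has [rmin = 0], so its gaps sum to [1] and
    [face_to_cube] sends it to the boundary of the cube. *)
Lemma hv_face_to_cube_boundary x : in_simplex n x -> excess x = 0 -> rmin n x = 0 ->
  hv (face_to_cube n k e x) = c0.
Proof.
  intros Hx Hal Hmn. set (y := fun l => gap n x (e l)).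
  assert (HW : rsum k y = 1).
  { unfold y. rewrite (in_face_gap_sum n J k e He HJn), Hmn by (apply excess_eq0_in_face; auto). ring. }
  assert (Hy0 : forall l, (l < k)%nat -> 0 <= y l) by (intros; unfold y; apply gap_nonneg; eapply e_le; eauto).
  destruct (Req_dec (rmax k y) 0) as [EY|EY].
  - exfalso. rewrite rsum_eq0 in HW; [lra|]. apply rmax_eq0_inv; auto.
  - pose proof (rmax_ge0 k y). destruct (rmax_attained k y ltac:(lra)) as [l [Hl El]].
    apply (hv_off_cube _ l Hl). right. unfold face_to_cube. fold y. change (gap n x (e l)) with (y l).
    rewrite HW, <- El. right. field. auto.
Qed.

Definition face_extension (x : nat -> R) : A :=
  if excluded_middle_informative (in_simplex n x)
  then cscal (mkC (face_cutoff x) 0) (hv (face_to_cube n k e x)) else c0.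

Lemma face_extension_simplex x : in_simplex n x ->
  face_extension x = cscal (mkC (face_cutoff x) 0) (hv (face_to_cube n k e x)).
Proof. intros Hx. unfold face_extension. destruct excluded_middle_informative; [auto|contradiction]. Qed.

Lemma face_extension_cont : cont_on_simplex n face_extension.
Proof.
  apply (cont_on_simplex_of_acont_at n _ (fun x => cscal (mkC (face_cutoff x) 0) (hv (face_to_cube n k e x))));
    [|apply face_extension_simplex].
  intros x0 Hx0. destruct (Req_dec (excess x0 + rmin n x0) 0) as [E|E].
  - pose proof (in_simplex_rmin_nonneg n x0 Hx0). pose proof (excess_nonneg x0).
    apply acont_at_rscal_vanishing; [apply face_cutoff_bound| |apply acont_at_hv_face_to_cube].
    apply hv_face_to_cube_boundary; auto; lra.
  - apply acont_at_rscal; [apply rcont_at_face_cutoff; auto|apply acont_at_hv_face_to_cube].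
Qed.

Lemma face_extension_in_B : inB_L A I n J face_extension.
Proof.
  assert (Hcompl : forall j' x, (j' <= n)%nat -> ~ In j' J -> in_Delta_j n j' x -> face_extension x = c0).
  { intros j' x Hj' HnJ Hx. rewrite face_extension_simplex by apply Hx.
    destruct He as [_ [_ Esurj]]. destruct (Esurj j' Hj' HnJ) as [l [Hl El]].
    rewrite (hv_off_cube _ l Hl); [apply cscal_c0|]. left.
    unfold face_to_cube, gap. rewrite El, (Delta_j_rmin n j' x Hj' Hx), Rminus_diag. unfold Rdiv; lra. }
  split; [split; [|split; [|split]]|]; auto.
  - intros x Hx. unfold face_extension. destruct excluded_middle_informative; [contradiction|auto].
  - apply face_extension_cont.
  - intros x [Hx [i [Hi Exi]]]. rewrite face_extension_simplex by auto.
    assert (Hmn : rmin n x = 0).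
    { apply Rle_antisym; [rewrite <- Exi; apply rmin_le; auto|apply in_simplex_rmin_nonneg; auto]. }
    destruct (Req_dec (excess x) 0) as [E|E].
    + rewrite hv_face_to_cube_boundary by auto. apply cscal_c0.
    + unfold face_cutoff. rewrite Hmn. unfold Rdiv. rewrite Rmult_0_l. apply cscal_0.
  - intros j x Hj Hx. destruct (in_dec Nat.eq_dec j J) as [HjJ|HjJ].
    + unfold face_extension. destruct excluded_middle_informative; [|apply (HI j Hj)].
      apply (HI j Hj). apply (fun_of_susp_in I_J k h I_J_c0 Hh); auto.
    + rewrite (Hcompl j x) by auto. apply (HI j Hj).
Qed.

(** On the image of the open cube, [face_cutoff = 1] and [face_to_cube] inverts [cube_to_face]. *)
Lemma face_restriction_face_extension : face_restriction n k e face_extension = h.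
Proof.
  unfold face_restriction. rewrite <- (susp_of_funK k h). f_equal.
  apply functional_extensionality; intro z. set (c := clamp01 (coords k z)).
  assert (Hc : in_cube k c) by apply clamp01_in_cube.
  destruct (classic (exists l, (l < k)%nat /\ (c l = 0 \/ c l = 1))) as [[l [Hl Hcl]]|Hno].
  - rewrite (inB_L_vanishing I n J face_extension)
      by (apply face_extension_in_B || (eapply cube_to_face_vanishing; eauto)).
    symmetry. apply (fun_of_susp_off_cube I_J k h Hh). exists l. split; auto.
    unfold c in Hcl. destruct (clamp01_cases (coords k z) l) as [[? ?]|[[? ?]|[? ?]]]; lra.
  - assert (Hin : forall l, (l < k)%nat -> 0 < c l < 1).
    { intros l Hl. destruct (Hc l Hl) as [[|] [|]]; auto; exfalso; apply Hno; eauto. }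
    rewrite face_extension_simplex by (eapply cube_to_face_simplex; eauto).
    assert (HM : rmax k c < 1) by (apply rmax_lub_lt; [lra|]; intros; apply Hin; auto).
    rewrite face_cutoff_cube_to_face, cscal_1 by auto.
    unfold hv. f_equal. rewrite <- (tuple_of_coords k z). apply tuple_of_ext.
    intros l Hl. rewrite (face_to_cube_cube_to_face n J k e He HJn j0 Hj0) by auto.
    specialize (Hin l Hl). unfold c in Hin.
    destruct (clamp01_cases (coords k z) l) as [[? ?]|[[? ?]|[? ?]]]; auto; lra.
Qed.

End Extension.

End FaceRestriction.

Theorem lemma4p4p10 (A : CStarAlg) (n : nat) (I : nat -> A -> Prop)
  (HI : forall j, (j <= n)%nat -> is_Cideal A (I j))
  (Hsum : is_sum_of_ideals A I n)
  (p : nat) (Hp : (p <= n)%nat)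
  (J : list nat) (HJnd : NoDup J) (HJn : forall j, In j J -> (j <= n)%nat)
  (HJlen : length J = (p + 1)%nat) :
  quotient_iso_susp A (inB_L A I n J) (inQ A I n (Z.of_nat p - 1)%Z)
    (fun a => forall j, In j J -> I j a) (n - p).
Proof.
  set (e := fun l => nth l (compl_list n J) 0%nat).
  assert (He : enumerates_compl n J (n - p) e)
    by (rewrite <- (compl_list_length n J p) by auto; apply enumerates_compl_list).
  assert (Hj0 : In (hd 0%nat J) J) by (destruct J; [simpl in HJlen; lia|left; auto]).
  exists (face_restriction n (n - p) e).
  split; [|split; [|split; [|split; [|split; [|split]]]]].
  - intros f g _ _. apply susp_of_fun_add.
  - intros a f _. apply susp_of_fun_scal.
  - intros f g _ _. apply susp_of_fun_mul.
  - intros f _. apply susp_of_fun_star.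
  - intros f Hf. eapply face_restriction_in_susp; eauto.
  - intros h Hh. exists (face_extension n J (n - p) e h). split.
    + eapply face_extension_in_B; eauto.
    + eapply face_restriction_face_extension; eauto.
  - intros f Hf. split.
    + intro H. eapply vanishes_on_face_in_Q; eauto. eapply face_restriction_eq0_vanishes_on_face; eauto.
    + intro H. eapply face_restriction_of_Q; eauto.
Qed.
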